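(* Let $m\in\mathbb{N}$ and let $V_{n}(x)$, $n\in\mathbb{N}$, and $V(x)$ be 1-periodic complex-valued distributions in the Sobolev space $H_{+}^{-m}$ such that $V_{n}\to V$ in $H_{+}^{-m}$ as $n\to\infty$. Then the operators \[ S_{\pm}^{(n)}\equiv S_{\pm}(V_{n}):=D_{\pm}^{2m}\dotplus V_{n}(x),\qquad \mathrm{Dom}(S_{\pm}^{(n)})=\{u\in H_{\pm}^{m}\,|\,D_{\pm}^{2m}u+V_{n}(x)u\in L_{2}(0,1)\}, \] converge to the operators \[ S_{\pm}\equiv S_{\pm}(V)=D_{\pm}^{2m}\dotplus V(x),\qquad \mathrm{Dom}(S_{\pm})=\{u\in H_{\pm}^{m}\,|\,D_{\pm}^{2m}u+V(x)u\in L_{2}(0,1)\}, \] in the generalized convergence sense for closed operators (convergence in the gap metric between closed operators, as in Kato's Perturbation Theory for Linear Operators).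
   Context: Work in the Hilbert space $L_{2}(0,1)$. For $s\in\mathbb{R}$, $H_{+}^{s}$ (resp. $H_{-}^{s}$) is the Sobolev space of 1-periodic (resp. 1-semiperiodic) functions/distributions $f=\sum_{k\in\mathbb{Z}}\widehat f(2k)e^{i2k\pi x}$ (resp. $f=\sum_{k}\widehat f(2k+1)e^{i(2k+1)\pi x}$) with norm $\big(\sum_k\langle 2k\rangle^{2s}|\widehat f(2k)|^2\big)^{1/2}$ (resp. $\big(\sum_k\langle 2k+1\rangle^{2s}|\widehat f(2k+1)|^2\big)^{1/2}$), $\langle k\rangle=1+|k|$. $D_{\pm}=-i\,d/dx$ with domain $H_{\pm}^{1}$, $D_{\pm}^{2m}:=|D_{\pm}|^{2m}$ with domain $H_{\pm}^{2m}$. $\langle\cdot,\cdot\rangle_{\pm}$ is the pairing between $H_{\pm}^{s}$ and $H_{\pm}^{-s}$ extending the $L_2(0,1)$ inner product. For $V\in H_{+}^{-m}$ the form-sum $S_{\pm}(V)=D_{\pm}^{2m}\dotplus V(x)$ is the m-sectorial operator associated (first representation theorem) with the closed densely defined sectorial form $t_{\pm}[u,v]=\langle D_{\pm}^{2m}u,v\rangle_{\pm}+\langle V(x)u,v\rangle_{\pm}$, $\mathrm{Dom}(t_{\pm})=H_{\pm}^{m}$; here $V(x)u$ is the formal product of Fourier series, which converges in $H_{\pm}^{-m}$ for $u\in H_{\pm}^{m}$ by the convolution lemma. *)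

From Stdlib Require Import Reals ZArith.
From Coquelicot Require Import Coquelicot.
Open Scope R_scope.

(* Everything is expressed through Fourier coefficients.  A function/distribution
   in H^s_+ (resp. H^s_-) is encoded by u : Z -> C, where u k is the coefficient
   \hat f(2k) (resp. \hat f(2k+1)).  The map f |-> (u k)_k is a unitary
   isomorphism L2(0,1) -> l2(Z) in both cases (e^{i2k pi x}, resp.
   e^{i(2k+1) pi x}, is an orthonormal basis of L2(0,1)). *)

Definition sumZ (f : Z -> R) : R :=
  Series (fun n => f (Z.of_nat n)) + Series (fun n => f (- Z.of_nat (S n))%Z).

Definition ex_sumZ (f : Z -> R) : Prop :=
  ex_series (fun n => f (Z.of_nat n)) /\ ex_series (fun n => f (- Z.of_nat (S n))%Z).

Definition sumZC (f : Z -> C) : C :=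
  (sumZ (fun k => Re (f k)), sumZ (fun k => Im (f k))).

(* b = true : periodic case (+), frequency 2k ; b = false : semiperiodic (-), 2k+1 *)
Definition freq (b : bool) (k : Z) : R :=
  if b then IZR (2 * k) else IZR (2 * k + 1).

Definition jbr (x : R) : R := 1 + Rabs x.

Definition sob_terms (b : bool) (s : Z) (u : Z -> C) : Z -> R :=
  fun k => powerRZ (jbr (freq b k)) (2 * s) * (Cmod (u k)) ^ 2.

Definition in_H (b : bool) (s : Z) (u : Z -> C) : Prop := ex_sumZ (sob_terms b s u).

Definition H_norm (b : bool) (s : Z) (u : Z -> C) : R := sqrt (sumZ (sob_terms b s u)).

Definition in_L2 (u : Z -> C) : Prop := ex_sumZ (fun k => (Cmod (u k)) ^ 2).

(* Fourier coefficients of the product V(x) u(x), V 1-periodic: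
   (Vu)^(nu_k) = sum_j \hat V(2j) \hat u(nu_k - 2j) = sum_j V j * u (k - j). *)
Definition conv (V u : Z -> C) (k : Z) : C := sumZC (fun j => Cmult (V j) (u (k - j)%Z)).

(* symbol of D^{2m} = |D|^{2m}, D = -i d/dx, on e^{i nu pi x} : (nu pi)^{2m} *)
Definition symb (b : bool) (m : nat) (k : Z) : R := (freq b k * PI) ^ (2 * m).

Definition S_graph (b : bool) (m : nat) (V : Z -> C) (u f : Z -> C) : Prop :=
  in_H b (Z.of_nat m) u /\ in_L2 f /\
  forall k, f k = Cplus (Cmult (RtoC (symb b m k)) (u k)) (conv V u k).

Definition graph_norm (u f : Z -> C) : R :=
  sqrt (sumZ (fun k => (Cmod (u k)) ^ 2) + sumZ (fun k => (Cmod (f k)) ^ 2)).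

Definition graph_dist (u f w g : Z -> C) : R :=
  graph_norm (fun k => Cminus (u k) (w k)) (fun k => Cminus (f k) (g k)).

(* Kato's delta(M, N) <= eps :  sup_{x in M, |x| = 1} dist(x, N) <= eps *)
Definition delta_le (M N : (Z -> C) -> (Z -> C) -> Prop) (eps : R) : Prop :=
  forall u f, M u f -> graph_norm u f = 1 ->
    forall eta, 0 < eta -> exists w g, N w g /\ graph_dist u f w g < eps + eta.

(* generalized convergence (Kato IV.2.4): hat-delta(G(T_n), G(T)) -> 0 *)
Definition gen_conv (T : nat -> (Z -> C) -> (Z -> C) -> Prop)
    (T0 : (Z -> C) -> (Z -> C) -> Prop) : Prop :=
  forall eps, 0 < eps -> exists N : nat, forall n, (N <= n)%nat ->
    delta_le (T n) T0 eps /\ delta_le T0 (T n) eps.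

From Stdlib Require Import Reals ZArith.
From Coquelicot Require Import Coquelicot.
From Stdlib Require Import Lra Lia List Psatz FunctionalExtensionality FinFun.
Open Scope R_scope.

(** In Fourier coefficients [S(V)] multiplies by the symbol [(nu pi)^{2m}] and convolves with the
    coefficients of [V].  Peetre's inequality and Cauchy-Schwarz make multiplication by [W] a bounded
    map [H^m -> H^{-m}] with norm [<~ |W|_{-m}].  Once [W] is split into finitely many low frequencies,
    which act boundedly on [L2], and a tail that is small in [H^{-m}], the map
    [z |-> (D^{2m} + lam)^{-1} (W z)] becomes a contraction of [H^m] for [lam] large, uniformly for
    all [W] close to [V] in [H^{-m}]; hence [(S(W) + lam) z = d] is solvable with
    [|z|_m <~ |d|_{-m}].  For a normalised point [(u, f)] of the graph of [S(V_n)], solving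
    [(S(V) + lam) z = (V_n - V) u] produces the point [(u + z, f - lam z)] of the graph of [S(V)] at
    distance [<~ |V_n - V|_{-m}]; exchanging the roles bounds the other half of the gap. *)

(** * Sums of nonnegative families over Z *)

Definition nonneg (f : Z -> R) : Prop := forall k, 0 <= f k.

Lemma sum_Sn_R (a : nat -> R) n : sum_n a (S n) = sum_n a n + a (S n).
Proof. rewrite sum_Sn. reflexivity. Qed.

Lemma Series_le_of_sum_n_le (a : nat -> R) (M : R) :
  (forall n, 0 <= a n) -> (forall N, sum_n a N <= M) -> ex_series a /\ Series a <= M.
Proof.
  intros Ha HM.
  assert (Hinc : forall n, sum_n a n <= sum_n a (S n)).
  { intro n. rewrite sum_Sn_R. specialize (Ha (S n)). lra. }
  destruct (ex_finite_lim_seq_incr _ M Hinc HM) as [l Hl].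
  assert (Hs : is_series a l) by exact Hl.
  split; [exists l; exact Hs|].
  rewrite (is_series_unique _ _ Hs).
  exact (is_lim_seq_le _ _ _ _ HM Hl (is_lim_seq_const M)).
Qed.

Lemma sum_n_le_Series (a : nat -> R) (N : nat) :
  (forall n, 0 <= a n) -> ex_series a -> sum_n a N <= Series a.
Proof.
  intros Ha [l Hl].
  rewrite (is_series_unique _ _ Hl).
  apply (is_lim_seq_le_loc (fun _ => sum_n a N) (sum_n a) (sum_n a N) l);
    [|apply is_lim_seq_const|exact Hl].
  exists N. intros n Hn. replace n with (N + (n - N))%nat by lia.
  induction (n - N)%nat as [|k IH]; [rewrite Nat.add_0_r; lra|].
  rewrite Nat.add_succ_r, sum_Sn_R. specialize (Ha (S (N + k))). lra.
Qed.

Lemma Series_nonneg (a : nat -> R) : (forall n, 0 <= a n) -> ex_series a -> 0 <= Series a.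
Proof.
  intros Ha He. eapply Rle_trans; [|apply (sum_n_le_Series a 0); auto].
  rewrite sum_O. auto.
Qed.

Fixpoint lsum (f : Z -> R) (l : list Z) : R :=
  match l with nil => 0 | x :: l' => f x + lsum f l' end.

Lemma lsum_app f l1 l2 : lsum f (l1 ++ l2) = lsum f l1 + lsum f l2.
Proof. induction l1; simpl; lra. Qed.

Lemma lsum_map f g l : lsum f (map g l) = lsum (fun x => f (g x)) l.
Proof. induction l; simpl; congruence. Qed.

Lemma lsum_nonneg f l : nonneg f -> 0 <= lsum f l.
Proof. intros H; induction l; simpl; [lra|]. specialize (H a); lra. Qed.

Lemma lsum_le f g l : (forall k, f k <= g k) -> lsum f l <= lsum g l.
Proof. intros H; induction l; simpl; [lra|]. specialize (H a); lra. Qed.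

Lemma lsum_plus f g l : lsum (fun k => f k + g k) l = lsum f l + lsum g l.
Proof. induction l; simpl; lra. Qed.

Lemma lsum_scal c f l : lsum (fun k => c * f k) l = c * lsum f l.
Proof. induction l; simpl; lra. Qed.

Lemma lsum_ext_in f g l : (forall x, In x l -> f x = g x) -> lsum f l = lsum g l.
Proof.
  induction l; simpl; intro H; [reflexivity|].
  rewrite H by auto. rewrite IHl by auto. reflexivity.
Qed.

Lemma lsum_remove_le f x L : nonneg f -> lsum f (remove Z.eq_dec x L) <= lsum f L.
Proof.
  intro Hf. induction L as [|y L IH]; simpl; [lra|].
  destruct (Z.eq_dec x y); simpl; specialize (Hf y); lra.
Qed.

Lemma lsum_remove f x L : nonneg f -> In x L ->
  f x + lsum f (remove Z.eq_dec x L) <= lsum f L.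
Proof.
  intro Hf. induction L as [|y L IH]; simpl; [tauto|].
  intros [->|Hin].
  - destruct (Z.eq_dec x x) as [_|n]; [|congruence].
    pose proof (lsum_remove_le f x L Hf). lra.
  - destruct (Z.eq_dec x y) as [->|n].
    + pose proof (lsum_remove_le f y L Hf). specialize (Hf y). lra.
    + simpl. specialize (IH Hin). lra.
Qed.

Lemma lsum_incl f l L : nonneg f -> NoDup l -> incl l L -> lsum f l <= lsum f L.
Proof.
  intros Hf Hl. revert L. induction Hl as [|x l Hx Hl IH]; intros L Hinc; simpl.
  - apply lsum_nonneg; auto.
  - assert (HxL : In x L) by (apply Hinc; left; auto).
    pose proof (lsum_remove f x L Hf HxL).
    assert (lsum f l <= lsum f (remove Z.eq_dec x L)).
    { apply IH. intros y Hy. apply in_in_remove; [intro; subst; tauto|]. apply Hinc; right; auto. }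
    lra.
Qed.

(* [window N] lists the integers of [-N, N-1], in the order in which [sumZ] enumerates Z. *)
Definition window (N : nat) : list Z :=
  map Z.of_nat (seq 0 N) ++ map (fun n => (- Z.of_nat (S n))%Z) (seq 0 N).

Lemma lsum_seq f g N : lsum f (map g (seq 0 N)) = match N with O => 0 | S N' => sum_n (fun n => f (g n)) N' end.
Proof.
  induction N as [|N IH]; [reflexivity|].
  rewrite seq_S, map_app, lsum_app, IH. simpl.
  destruct N; [rewrite sum_O; lra|]. rewrite sum_Sn_R. lra.
Qed.

Lemma lsum_window f N :
  lsum f (window (S N)) = sum_n (fun n => f (Z.of_nat n)) N + sum_n (fun n => f (- Z.of_nat (S n))%Z) N.
Proof. unfold window. rewrite lsum_app, !lsum_seq. reflexivity. Qed.

Lemma window_NoDup N : NoDup (window N).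
Proof.
  unfold window. apply NoDup_app.
  - apply Injective_map_NoDup; [intros x y H; lia|apply seq_NoDup].
  - apply Injective_map_NoDup; [intros x y H; lia|apply seq_NoDup].
  - intros x H1 H2. apply in_map_iff in H1, H2.
    destruct H1 as [a [Ha _]]; destruct H2 as [c [Hc _]]. lia.
Qed.

Lemma in_window N x : (Z.abs x < Z.of_nat N)%Z -> In x (window N).
Proof.
  intro H. unfold window. apply in_or_app. destruct (Z_le_dec 0 x).
  - left. apply in_map_iff. exists (Z.to_nat x). split; [lia|]. apply in_seq. lia.
  - right. apply in_map_iff. exists (Z.to_nat (- x - 1)). split; [lia|]. apply in_seq. lia.
Qed.

Lemma in_window_abs N x : In x (window N) -> (Z.abs x <= Z.of_nat N)%Z.
Proof.
  unfold window. intro H. apply in_app_or in H. destruct H as [H|H];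
  apply in_map_iff in H; destruct H as [n [<- Hn]]; apply in_seq in Hn; lia.
Qed.

Lemma sum_n_nonneg (a : nat -> R) N : (forall n, 0 <= a n) -> 0 <= sum_n a N.
Proof.
  intro Ha. induction N as [|N IH]; [rewrite sum_O; apply Ha|].
  rewrite sum_Sn_R. specialize (Ha (S N)). lra.
Qed.

Lemma sumZ_le_of_window_le f M : nonneg f -> (forall N, lsum f (window N) <= M) ->
  ex_sumZ f /\ sumZ f <= M.
Proof.
  intros Hf HM.
  set (fp := fun n : nat => f (Z.of_nat n)). set (fn := fun n : nat => f (- Z.of_nat (S n))%Z).
  assert (Hp : forall n, 0 <= fp n) by (intro; apply Hf).
  assert (Hn : forall n, 0 <= fn n) by (intro; apply Hf).
  assert (HM' : forall N, sum_n fp N + sum_n fn N <= M).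
  { intro N. unfold fp, fn. rewrite <- lsum_window. apply HM. }
  assert (B1 : forall N, sum_n fp N <= M).
  { intro N. specialize (HM' N). pose proof (sum_n_nonneg fn N Hn). lra. }
  assert (B2 : forall N, sum_n fn N <= M).
  { intro N. specialize (HM' N). pose proof (sum_n_nonneg fp N Hp). lra. }
  destruct (Series_le_of_sum_n_le _ _ Hp B1) as [[l1 H1] _].
  destruct (Series_le_of_sum_n_le _ _ Hn B2) as [[l2 H2] _].
  split; [split; [exists l1|exists l2]; assumption|].
  change (Series fp + Series fn <= M).
  rewrite (is_series_unique _ _ H1), (is_series_unique _ _ H2).
  exact (is_lim_seq_le _ _ _ _ HM' (is_lim_seq_plus' _ _ _ _ H1 H2) (is_lim_seq_const M)).
Qed.

Lemma lsum_window_le_sumZ f N : nonneg f -> ex_sumZ f -> lsum f (window N) <= sumZ f.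
Proof.
  intros Hf [E1 E2]. unfold sumZ.
  pose proof (Series_nonneg _ (fun n => Hf _) E1). pose proof (Series_nonneg _ (fun n => Hf _) E2).
  destruct N as [|N]; [cbn [window seq map app lsum]; lra|].
  rewrite lsum_window.
  pose proof (sum_n_le_Series _ N (fun n => Hf _) E1).
  pose proof (sum_n_le_Series _ N (fun n => Hf _) E2). lra.
Qed.

Lemma lsum_le_sumZ f l : nonneg f -> ex_sumZ f -> NoDup l -> lsum f l <= sumZ f.
Proof.
  intros Hf He Hl.
  set (N := S (fold_right (fun x acc => max (Z.to_nat (Z.abs x)) acc) O l)).
  assert (Hinc : incl l (window N)).
  { intros x Hx. apply in_window. unfold N.
    enough ((Z.to_nat (Z.abs x) <= fold_right (fun x acc => max (Z.to_nat (Z.abs x)) acc) O l)%nat) by lia.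
    clear -Hx. induction l as [|y l IH]; simpl in *; [tauto|].
    destruct Hx as [->|H]; [lia|]. specialize (IH H). lia. }
  eapply Rle_trans; [apply (lsum_incl f l (window N) Hf Hl Hinc)|].
  apply lsum_window_le_sumZ; auto.
Qed.

Lemma sumZ_nonneg f : nonneg f -> ex_sumZ f -> 0 <= sumZ f.
Proof. intros Hf He. exact (lsum_window_le_sumZ f 0 Hf He). Qed.

Lemma sumZ_ge_term f k : nonneg f -> ex_sumZ f -> f k <= sumZ f.
Proof.
  intros Hf He. pose proof (lsum_le_sumZ f (k :: nil) Hf He) as H. simpl in H.
  assert (NoDup (k :: nil)) by (constructor; [simpl; tauto|constructor]). specialize (H H0). lra.
Qed.

Lemma sumZ_comp_inj_le f (phi : Z -> Z) : nonneg f -> ex_sumZ f -> Injective phi ->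
  ex_sumZ (fun k => f (phi k)) /\ sumZ (fun k => f (phi k)) <= sumZ f.
Proof.
  intros Hf He Hphi. apply sumZ_le_of_window_le; [intro; apply Hf|].
  intro N. rewrite <- lsum_map. apply lsum_le_sumZ; auto.
  apply Injective_map_NoDup; [exact Hphi|apply window_NoDup].
Qed.

Lemma sumZ_le_compat f g : nonneg f -> (forall k, f k <= g k) -> ex_sumZ g ->
  ex_sumZ f /\ sumZ f <= sumZ g.
Proof.
  intros Hf Hfg Hg. apply sumZ_le_of_window_le; auto. intro N.
  eapply Rle_trans; [apply lsum_le; eauto|]. apply lsum_window_le_sumZ; auto.
  intro k; specialize (Hf k); specialize (Hfg k); lra.
Qed.

Lemma sumZ_plus f g : ex_sumZ f -> ex_sumZ g ->
  ex_sumZ (fun k => f k + g k) /\ sumZ (fun k => f k + g k) = sumZ f + sumZ g.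
Proof.
  intros [F1 F2] [G1 G2]. split; [split|].
  - apply (ex_series_plus _ _ F1 G1).
  - apply (ex_series_plus _ _ F2 G2).
  - unfold sumZ. rewrite (Series_plus _ _ F1 G1), (Series_plus _ _ F2 G2). lra.
Qed.

Lemma sumZ_scal c f : ex_sumZ f ->
  ex_sumZ (fun k => c * f k) /\ sumZ (fun k => c * f k) = c * sumZ f.
Proof.
  intros [F1 F2]. split; [split|].
  - apply (ex_series_scal_l c _ F1).
  - apply (ex_series_scal_l c _ F2).
  - unfold sumZ. rewrite !Series_scal_l. lra.
Qed.

Lemma sumZ_opp f : sumZ (fun k => - f k) = - sumZ f.
Proof. unfold sumZ. rewrite !Series_opp. lra. Qed.

Lemma sumZ_ext f g : (forall k, f k = g k) -> sumZ f = sumZ g.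
Proof. intro H. replace g with f; [auto|]. apply functional_extensionality; auto. Qed.

Lemma ex_sumZ_ext f g : (forall k, f k = g k) -> ex_sumZ f -> ex_sumZ g.
Proof. intro H. replace g with f; [auto|]. apply functional_extensionality; auto. Qed.

Lemma sumZ_zero : ex_sumZ (fun _ => 0) /\ sumZ (fun _ => 0) = 0.
Proof.
  assert (H : nonneg (fun _ => 0)) by (intro; lra).
  destruct (sumZ_le_of_window_le (fun _ => 0) 0 H) as [E S].
  { intro N. clear. induction (window N); simpl; lra. }
  split; auto. pose proof (sumZ_nonneg _ H E). lra.
Qed.

Lemma sumZ_window_approx f eps : nonneg f -> ex_sumZ f -> 0 < eps ->
  exists N, sumZ f - eps <= lsum f (window N).
Proof.
  intros Hf [[l1 H1] [l2 H2]] He.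
  pose proof (is_lim_seq_plus' _ _ _ _ H1 H2) as L.
  apply is_lim_seq_spec in L. destruct (L (mkposreal eps He)) as [N HN].
  exists (S N). rewrite lsum_window. unfold sumZ.
  rewrite (is_series_unique _ _ H1), (is_series_unique _ _ H2).
  specialize (HN N (le_n _)). apply Rabs_lt_between in HN.
  change (pos (mkposreal eps He)) with eps in HN.
  match type of HN with _ < ?S - _ < _ => change (l1 + l2 - eps <= S) end. lra.
Qed.

Lemma sumZ_lsum (F : Z -> Z -> R) (l : list Z) : (forall i, ex_sumZ (F i)) ->
  ex_sumZ (fun j => lsum (fun i => F i j) l) /\
  sumZ (fun j => lsum (fun i => F i j) l) = lsum (fun i => sumZ (F i)) l.
Proof.
  intro HF. induction l as [|i l [E S]]; simpl; [apply sumZ_zero|].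
  destruct (sumZ_plus _ _ (HF i) E) as [E' S']. split; auto. rewrite S', S. reflexivity.
Qed.

Lemma sumZ_swap_le (F : Z -> Z -> R) : (forall j k, 0 <= F j k) -> (forall j, ex_sumZ (F j)) ->
  ex_sumZ (fun j => sumZ (F j)) ->
  (forall k, ex_sumZ (fun j => F j k)) /\ ex_sumZ (fun k => sumZ (fun j => F j k)) /\
  sumZ (fun k => sumZ (fun j => F j k)) <= sumZ (fun j => sumZ (F j)).
Proof.
  intros Hnn HF HS.
  assert (Hk : forall k, ex_sumZ (fun j => F j k)).
  { intro k. apply (sumZ_le_compat _ (fun j => sumZ (F j))); auto; [intro; auto|].
    intro j. apply sumZ_ge_term; auto. intro; auto. }
  split; auto.
  apply sumZ_le_of_window_le; [intro k; apply sumZ_nonneg; [intro; auto|auto]|].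
  intro N. destruct (sumZ_lsum (fun i j => F j i) (window N) Hk) as [E S].
  rewrite <- S. apply sumZ_le_compat; auto.
  - intro j. apply lsum_nonneg. intro; auto.
  - intro j. apply lsum_le_sumZ; [intro; auto|auto|apply window_NoDup].
Qed.

Lemma sq_le_of_amgm_bound (S A B : R) : 0 <= S -> 0 <= A -> 0 <= B ->
  (forall t, 0 < t -> S <= (t * A + B / t) / 2) -> S * S <= A * B.
Proof.
  intros HS HA HB H.
  destruct (Req_dec S 0) as [->|HS0]; [nra|].
  destruct (Req_dec A 0) as [->|HA0].
  - exfalso. assert (Ht : 0 < (B + 1) / (2 * S)) by (apply Rdiv_lt_0_compat; lra).
    specialize (H _ Ht).
    replace (((B + 1) / (2 * S)) * 0 + B / ((B + 1) / (2 * S))) with (2 * S * B / (B + 1)) in H by (field; lra).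
    assert (2 * S * B / (B + 1) / 2 < S) by (apply Rmult_lt_reg_r with (2 * (B + 1)); [lra|field_simplify; lra]).
    lra.
  - destruct (Req_dec B 0) as [->|HB0].
    + exfalso. assert (Ht : 0 < S / A) by (apply Rdiv_lt_0_compat; lra).
      specialize (H _ Ht). replace ((S / A * A + 0 / (S / A)) / 2) with (S / 2) in H by (field; lra). lra.
    + pose proof (sqrt_lt_R0 A ltac:(lra)). pose proof (sqrt_lt_R0 B ltac:(lra)).
      specialize (H (sqrt B / sqrt A) (Rdiv_lt_0_compat _ _ H1 H0)).
      replace ((sqrt B / sqrt A * A + B / (sqrt B / sqrt A)) / 2) with (sqrt A * sqrt B) in H.
      2:{ assert (EA : A = sqrt A * sqrt A) by (rewrite sqrt_sqrt; lra).
          assert (EB : B = sqrt B * sqrt B) by (rewrite sqrt_sqrt; lra).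
          set (a := sqrt A) in *. set (b := sqrt B) in *. clearbody a b.
          rewrite EA, EB. field. lra. }
      assert (S * S <= (sqrt A * sqrt A) * (sqrt B * sqrt B)) by nra.
      rewrite !sqrt_sqrt in H2 by lra. exact H2.
Qed.

Lemma sumZ_cauchy_schwarz_w (x y w : Z -> R) : nonneg x -> nonneg y -> nonneg w ->
  ex_sumZ (fun k => x k ^ 2 * w k) -> ex_sumZ (fun k => y k ^ 2 * w k) ->
  ex_sumZ (fun k => x k * y k * w k) /\
  sumZ (fun k => x k * y k * w k) ^ 2 <= sumZ (fun k => x k ^ 2 * w k) * sumZ (fun k => y k ^ 2 * w k).
Proof.
  intros Hx Hy Hw Ex Ey.
  assert (Hn : nonneg (fun k => x k * y k * w k)).
  { intro k. specialize (Hx k); specialize (Hy k); specialize (Hw k). apply Rmult_le_pos; [apply Rmult_le_pos|]; auto. }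
  (* termwise [2 x y <= t x^2 + y^2 / t] for every [t > 0], then optimise in [t] *)
  assert (Ht : forall t, 0 < t -> ex_sumZ (fun k => x k * y k * w k) /\
     sumZ (fun k => x k * y k * w k) <= (t * sumZ (fun k => x k ^ 2 * w k) + sumZ (fun k => y k ^ 2 * w k) / t) / 2).
  { intros t Ht.
    destruct (sumZ_scal (t/2) _ Ex) as [E1 S1].
    destruct (sumZ_scal (/t/2) _ Ey) as [E2 S2].
    destruct (sumZ_plus _ _ E1 E2) as [E3 S3].
    assert (Hpt : forall k, x k * y k * w k <= t / 2 * (x k ^ 2 * w k) + / t / 2 * (y k ^ 2 * w k)).
    { intro k. specialize (Hx k); specialize (Hy k); specialize (Hw k).
      assert (0 <= (t * x k - y k) ^ 2 * w k) by (apply Rmult_le_pos; [apply pow2_ge_0|exact Hw]).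
      apply Rmult_le_reg_l with (2 * t); [lra|].
      replace (2 * t * (t / 2 * (x k ^ 2 * w k) + / t / 2 * (y k ^ 2 * w k)))
        with (t * t * x k ^ 2 * w k + y k ^ 2 * w k) by (field; lra).
      nra. }
    destruct (sumZ_le_compat _ _ Hn Hpt E3) as [E4 S4].
    split; auto. rewrite S3, S1, S2 in S4. unfold Rdiv in *. lra. }
  destruct (Ht 1 Rlt_0_1) as [E _]. split; auto.
  assert (HA := sumZ_nonneg _ (fun k => Rmult_le_pos _ _ (pow2_ge_0 (x k)) (Hw k)) Ex).
  assert (HB := sumZ_nonneg _ (fun k => Rmult_le_pos _ _ (pow2_ge_0 (y k)) (Hw k)) Ey).
  replace (sumZ (fun k => x k * y k * w k) ^ 2) with (sumZ (fun k => x k * y k * w k) * sumZ (fun k => x k * y k * w k)) by ring.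
  exact (sq_le_of_amgm_bound _ _ _ (sumZ_nonneg _ Hn E) HA HB (fun t Ht0 => proj2 (Ht t Ht0))).
Qed.

Lemma sumZ_cauchy_schwarz (x y : Z -> R) : nonneg x -> nonneg y ->
  ex_sumZ (fun k => x k ^ 2) -> ex_sumZ (fun k => y k ^ 2) ->
  ex_sumZ (fun k => x k * y k) /\
  sumZ (fun k => x k * y k) ^ 2 <= sumZ (fun k => x k ^ 2) * sumZ (fun k => y k ^ 2).
Proof.
  intros Hx Hy Ex Ey.
  assert (E1 : forall f : Z -> R, (fun k => f k * 1) = f)
    by (intro f; apply functional_extensionality; intro; ring).
  pose proof (sumZ_cauchy_schwarz_w x y (fun _ => 1) Hx Hy (fun _ => Rle_0_1)) as H.
  rewrite !E1 in H. exact (H Ex Ey).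
Qed.

Lemma sumZ_cauchy_schwarz_mass (x w : Z -> R) : nonneg x -> nonneg w ->
  ex_sumZ (fun k => x k ^ 2 * w k) -> ex_sumZ w ->
  ex_sumZ (fun k => x k * w k) /\
  sumZ (fun k => x k * w k) ^ 2 <= sumZ (fun k => x k ^ 2 * w k) * sumZ w.
Proof.
  intros Hx Hw Ex Ew.
  assert (E1 : (fun k => x k * 1 * w k) = (fun k => x k * w k))
    by (apply functional_extensionality; intro; ring).
  assert (E2 : (fun k => 1 ^ 2 * w k) = w)
    by (apply functional_extensionality; intro; ring).
  pose proof (sumZ_cauchy_schwarz_w x (fun _ => 1) w Hx (fun _ => Rle_0_1) Hw) as H.
  cbv beta in H. rewrite E1, E2 in H. exact (H Ex Ew).
Qed.

(** * Sums of complex families *)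

Definition abs_summable (F : Z -> C) : Prop := ex_sumZ (fun k => Cmod (F k)).

Lemma sumZ_abs g : ex_sumZ (fun k => Rabs (g k)) -> ex_sumZ g /\ Rabs (sumZ g) <= sumZ (fun k => Rabs (g k)).
Proof.
  intros [E1 E2].
  split; [split; apply ex_series_Rabs; assumption|].
  unfold sumZ. pose proof (Series_Rabs _ E1). pose proof (Series_Rabs _ E2).
  eapply Rle_trans; [apply Rabs_triang|lra].
Qed.

Lemma Cmod_le_Re_Im (c : C) : Cmod c <= Rabs (Re c) + Rabs (Im c).
Proof.
  unfold Cmod, Re, Im. destruct c as [x y]; simpl.
  pose proof (Rabs_pos x); pose proof (Rabs_pos y).
  rewrite <- (sqrt_pow2 (Rabs x + Rabs y)) by lra.
  apply sqrt_le_1_alt.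
  pose proof (pow2_abs x). pose proof (pow2_abs y). simpl in *. nra.
Qed.

Lemma im_le_Cmod (c : C) : Rabs (Im c) <= Cmod c.
Proof. eapply Rle_trans; [|apply Rmax_Cmod]. apply Rmax_r. Qed.

Lemma abs_summable_Re F : abs_summable F -> ex_sumZ (fun k => Rabs (Re (F k))) /\
  sumZ (fun k => Rabs (Re (F k))) <= sumZ (fun k => Cmod (F k)).
Proof. intro H. exact (sumZ_le_compat _ _ (fun k => Rabs_pos _) (fun k => re_le_Cmod (F k)) H). Qed.

Lemma abs_summable_Im F : abs_summable F -> ex_sumZ (fun k => Rabs (Im (F k))) /\
  sumZ (fun k => Rabs (Im (F k))) <= sumZ (fun k => Cmod (F k)).
Proof. intro H. exact (sumZ_le_compat _ _ (fun k => Rabs_pos _) (fun k => im_le_Cmod (F k)) H). Qed.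

Lemma abs_summable_le F g : nonneg g -> (forall k, Cmod (F k) <= g k) -> ex_sumZ g -> abs_summable F.
Proof. intros Hg H E. exact (proj1 (sumZ_le_compat _ _ (fun k => Cmod_ge_0 _) H E)). Qed.

Lemma Cmod_sumZC_le F : abs_summable F -> Cmod (sumZC F) <= 2 * sumZ (fun k => Cmod (F k)).
Proof.
  intro H. eapply Rle_trans; [apply Cmod_le_Re_Im|]. unfold sumZC, Re, Im; simpl.
  destruct (abs_summable_Re F H) as [ER SR]. destruct (abs_summable_Im F H) as [EI SI].
  pose proof (proj2 (sumZ_abs _ ER)). pose proof (proj2 (sumZ_abs _ EI)).
  unfold Re, Im in *. lra.
Qed.

Lemma sumZC_plus F G : abs_summable F -> abs_summable G ->
  sumZC (fun k => Cplus (F k) (G k)) = Cplus (sumZC F) (sumZC G).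
Proof.
  intros HF HG. unfold sumZC, Cplus; simpl.
  destruct (sumZ_abs _ (proj1 (abs_summable_Re F HF))) as [E1 _].
  destruct (sumZ_abs _ (proj1 (abs_summable_Im F HF))) as [E2 _].
  destruct (sumZ_abs _ (proj1 (abs_summable_Re G HG))) as [E3 _].
  destruct (sumZ_abs _ (proj1 (abs_summable_Im G HG))) as [E4 _].
  f_equal; [rewrite <- (proj2 (sumZ_plus _ _ E1 E3))|rewrite <- (proj2 (sumZ_plus _ _ E2 E4))];
    apply sumZ_ext; reflexivity.
Qed.

Lemma sumZC_opp F : sumZC (fun k => Copp (F k)) = Copp (sumZC F).
Proof. unfold sumZC, Copp; simpl. f_equal; apply sumZ_opp. Qed.

Lemma sumZC_minus F G : abs_summable F -> abs_summable G ->
  sumZC (fun k => Cminus (F k) (G k)) = Cminus (sumZC F) (sumZC G).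
Proof.
  intros HF HG. unfold Cminus. rewrite <- sumZC_opp, <- sumZC_plus; [reflexivity|exact HF|].
  unfold abs_summable. apply (ex_sumZ_ext (fun k => Cmod (G k))); [intro; rewrite Cmod_opp; reflexivity|exact HG].
Qed.

Lemma Cmod_minus_sym a b : Cmod (Cminus a b) = Cmod (Cminus b a).
Proof.
  replace (Cminus b a) with (Copp (Cminus a b)) by (apply injective_projections; simpl; ring).
  rewrite Cmod_opp. reflexivity.
Qed.

Lemma Cmod_minus_le (a b : C) : Cmod (Cminus a b) <= Cmod a + Cmod b.
Proof. unfold Cminus. eapply Rle_trans; [apply Cmod_triangle|]. rewrite Cmod_opp. lra. Qed.

(** * Weighted l2 spaces *)

Definition in_l2w (w : Z -> R) (x : Z -> C) : Prop := ex_sumZ (fun k => (w k * Cmod (x k)) ^ 2).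
Definition l2w_norm2 (w : Z -> R) (x : Z -> C) : R := sumZ (fun k => (w k * Cmod (x k)) ^ 2).

Definition unit_weight : Z -> R := fun _ => 1.

Lemma unit_weight_nonneg : nonneg unit_weight.
Proof. intro; unfold unit_weight; lra. Qed.

Lemma l2w_norm2_nonneg w x : in_l2w w x -> 0 <= l2w_norm2 w x.
Proof. intro H. apply sumZ_nonneg; auto. intro; apply pow2_ge_0. Qed.

Lemma l2w_norm2_ge_term w x k : in_l2w w x -> (w k * Cmod (x k)) ^ 2 <= l2w_norm2 w x.
Proof. intro H. apply (sumZ_ge_term (fun k => (w k * Cmod (x k)) ^ 2)); auto. intro; apply pow2_ge_0. Qed.

Lemma Cmod_le_sqrt_l2w_norm2 w x k : 1 <= w k -> in_l2w w x -> Cmod (x k) <= sqrt (l2w_norm2 w x).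
Proof.
  intros H1 H. pose proof (l2w_norm2_ge_term w x k H).
  rewrite <- (sqrt_pow2 (Cmod (x k))) by apply Cmod_ge_0.
  apply sqrt_le_1_alt. eapply Rle_trans; [|exact H0].
  pose proof (Cmod_ge_0 (x k)). rewrite Rpow_mult_distr.
  assert (1 <= w k ^ 2) by (apply pow_R1_Rle; auto). nra.
Qed.

Lemma l2w_le w w' x y c : 0 <= c -> in_l2w w' y ->
  (forall k, (w k * Cmod (x k)) ^ 2 <= c * (w' k * Cmod (y k)) ^ 2) ->
  in_l2w w x /\ l2w_norm2 w x <= c * l2w_norm2 w' y.
Proof.
  intros Hc Hy H. destruct (sumZ_scal c _ Hy) as [E S].
  destruct (sumZ_le_compat _ _ (fun k => pow2_ge_0 _) H E) as [E' S'].
  split; auto. unfold l2w_norm2. rewrite <- S. exact S'.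
Qed.

Lemma l2w_ext w x y : (forall k, x k = y k) -> in_l2w w x -> in_l2w w y /\ l2w_norm2 w y = l2w_norm2 w x.
Proof. intros H E. replace y with x by (apply functional_extensionality; auto). auto. Qed.

Lemma l2w_zero w : in_l2w w (fun _ => RtoC 0) /\ l2w_norm2 w (fun _ => RtoC 0) = 0.
Proof.
  assert (E : forall k : Z, 0 = (w k * Cmod (RtoC 0)) ^ 2) by (intro; rewrite Cmod_R, Rabs_R0; ring).
  unfold in_l2w, l2w_norm2. rewrite (sumZ_ext _ (fun _ => 0)) by (intro; symmetry; apply E).
  split; [apply (ex_sumZ_ext (fun _ => 0)); [exact E|apply sumZ_zero]|apply sumZ_zero].
Qed.

Lemma l2w_norm2_minus_self w x : l2w_norm2 w (fun k => Cminus (x k) (x k)) = 0.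
Proof.
  rewrite <- (proj2 (l2w_zero w)). apply (l2w_ext w (fun _ => RtoC 0)); [|apply l2w_zero].
  intro k. apply injective_projections; simpl; ring.
Qed.

Lemma sq_le_of_le_add (a b c : R) : 0 <= a -> 0 <= b -> 0 <= c -> a <= b + c -> a ^ 2 <= 2 * b ^ 2 + 2 * c ^ 2.
Proof.
  intros. assert (a ^ 2 <= (b + c) ^ 2) by (apply pow_incr; lra).
  assert (0 <= (b - c) ^ 2) by apply pow2_ge_0. simpl in *. nra.
Qed.

Lemma l2w_of_Cmod_le_add w x y z : nonneg w -> in_l2w w x -> in_l2w w y ->
  (forall k, Cmod (z k) <= Cmod (x k) + Cmod (y k)) ->
  in_l2w w z /\ l2w_norm2 w z <= 2 * l2w_norm2 w x + 2 * l2w_norm2 w y.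
Proof.
  intros Hw Hx Hy H.
  destruct (sumZ_scal 2 _ Hx) as [E1 S1]. destruct (sumZ_scal 2 _ Hy) as [E2 S2].
  destruct (sumZ_plus _ _ E1 E2) as [E3 S3].
  assert (Hpt : forall k, (w k * Cmod (z k)) ^ 2 <= 2 * (w k * Cmod (x k)) ^ 2 + 2 * (w k * Cmod (y k)) ^ 2).
  { intro k. specialize (Hw k); specialize (H k).
    pose proof (Cmod_ge_0 (x k)); pose proof (Cmod_ge_0 (y k)); pose proof (Cmod_ge_0 (z k)).
    apply sq_le_of_le_add; nra. }
  destruct (sumZ_le_compat (fun k => (w k * Cmod (z k)) ^ 2) _ (fun k => pow2_ge_0 _) Hpt E3) as [E S].
  split; auto. unfold l2w_norm2. rewrite S3, S1, S2 in S. exact S.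
Qed.

Lemma l2w_minus w x y : nonneg w -> in_l2w w x -> in_l2w w y ->
  in_l2w w (fun k => Cminus (x k) (y k)) /\
  l2w_norm2 w (fun k => Cminus (x k) (y k)) <= 2 * l2w_norm2 w x + 2 * l2w_norm2 w y.
Proof. intros. apply l2w_of_Cmod_le_add; auto. intro; apply Cmod_minus_le. Qed.

Lemma l2w_plus w x y : nonneg w -> in_l2w w x -> in_l2w w y ->
  in_l2w w (fun k => Cplus (x k) (y k)) /\
  l2w_norm2 w (fun k => Cplus (x k) (y k)) <= 2 * l2w_norm2 w x + 2 * l2w_norm2 w y.
Proof. intros. apply l2w_of_Cmod_le_add; auto. intro; apply Cmod_triangle. Qed.

Lemma l2w_norm2_minus_sym w x y :
  l2w_norm2 w (fun k => Cminus (x k) (y k)) = l2w_norm2 w (fun k => Cminus (y k) (x k)).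
Proof. unfold l2w_norm2. apply sumZ_ext. intro k. rewrite Cmod_minus_sym. reflexivity. Qed.

Lemma Rle_of_le_plus_eps a b c : 0 <= c -> (forall e, 0 < e -> e <= 1 -> a <= b + e * c) -> a <= b.
Proof.
  intros Hc H. apply Rnot_lt_le. intro Hab.
  set (e := Rmin 1 ((a - b) / (2 * (c + 1)))).
  assert (He : 0 < e) by (apply Rmin_pos; [lra|apply Rdiv_lt_0_compat; lra]).
  assert (He2 : e <= (a - b) / (2 * (c + 1))) by apply Rmin_r.
  specialize (H e He (Rmin_l _ _)).
  assert (e * c <= (a - b) / (2 * (c + 1)) * c) by (apply Rmult_le_compat_r; lra).
  assert ((a - b) / (2 * (c + 1)) * c < a - b)
    by (apply Rmult_lt_reg_r with (2 * (c + 1)); [lra|field_simplify; nra]).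
  lra.
Qed.

(* The norm bound is checked on each finite window, where uniform convergence suffices. *)
Lemma l2w_of_uniform_approx w x (y : nat -> Z -> C) M : nonneg w ->
  (forall p, in_l2w w (y p) /\ l2w_norm2 w (y p) <= M) ->
  (forall e, 0 < e -> exists p, forall k, Cmod (Cminus (x k) (y p k)) <= e) ->
  in_l2w w x /\ l2w_norm2 w x <= 2 * M.
Proof.
  intros Hw Hy Happ. apply sumZ_le_of_window_le; [intro; apply pow2_ge_0|].
  intro N. set (C := lsum (fun k => 2 * w k ^ 2) (window N)).
  assert (HC : 0 <= C) by (apply lsum_nonneg; intro k; pose proof (pow2_ge_0 (w k)); lra).
  apply (Rle_of_le_plus_eps _ _ C HC). intros e He He1.
  destruct (Happ e He) as [p Hp].
  assert (Hpt : forall k, (w k * Cmod (x k)) ^ 2 <= 2 * (w k * Cmod (y p k)) ^ 2 + e * (2 * w k ^ 2)).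
  { intro k. specialize (Hp k). specialize (Hw k).
    assert (Hxk : Cmod (x k) <= Cmod (y p k) + Cmod (Cminus (x k) (y p k))).
    { replace (x k) with (Cplus (y p k) (Cminus (x k) (y p k))) at 1 by (apply injective_projections; simpl; ring).
      apply Cmod_triangle. }
    pose proof (Cmod_ge_0 (x k)). pose proof (Cmod_ge_0 (y p k)). pose proof (Cmod_ge_0 (Cminus (x k) (y p k))).
    assert (HH := sq_le_of_le_add (w k * Cmod (x k)) (w k * Cmod (y p k)) (w k * Cmod (Cminus (x k) (y p k)))
      ltac:(nra) ltac:(nra) ltac:(nra) ltac:(nra)).
    assert ((w k * Cmod (Cminus (x k) (y p k))) ^ 2 <= w k ^ 2 * e).
    { rewrite Rpow_mult_distr. apply Rmult_le_compat_l; [apply pow2_ge_0|]. simpl. nra. }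
    lra. }
  eapply Rle_trans; [apply lsum_le; exact Hpt|].
  rewrite lsum_plus. unfold C. rewrite lsum_scal, lsum_scal.
  destruct (Hy p) as [E S].
  pose proof (lsum_window_le_sumZ (fun k => (w k * Cmod (y p k)) ^ 2) N (fun _ => pow2_ge_0 _) E).
  unfold l2w_norm2 in S. lra.
Qed.

(** * Sobolev weights *)

Definition bracket (b : bool) (k : Z) : R := jbr (freq b k).
Definition sob_weight (b : bool) (m : nat) (k : Z) : R := bracket b k ^ m.
Definition inv_sob_weight (b : bool) (m : nat) (k : Z) : R := / sob_weight b m k.

Lemma bracket_ge1 b k : 1 <= bracket b k.
Proof. unfold bracket, jbr. pose proof (Rabs_pos (freq b k)). lra. Qed.

Lemma sob_weight_ge1 b m k : 1 <= sob_weight b m k.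
Proof. apply pow_R1_Rle, bracket_ge1. Qed.

Lemma sob_weight_pos b m k : 0 < sob_weight b m k.
Proof. pose proof (sob_weight_ge1 b m k); lra. Qed.

Lemma sob_weight_nonneg b m : nonneg (sob_weight b m).
Proof. intro k. left; apply sob_weight_pos. Qed.

Lemma inv_sob_weight_nonneg b m : nonneg (inv_sob_weight b m).
Proof. intro k. left; apply Rinv_0_lt_compat, sob_weight_pos. Qed.

Lemma pow_plus_le (x y c : R) (m : nat) : 0 <= x -> 0 <= y -> 0 <= c ->
  (c * (x + y)) ^ m <= c ^ m * 2 ^ m * (x ^ m + y ^ m).
Proof.
  intros Hx Hy Hc.
  assert (0 <= x ^ m) by (apply pow_le; auto). assert (0 <= y ^ m) by (apply pow_le; auto).
  assert (0 <= c ^ m * 2 ^ m) by (apply Rmult_le_pos; apply pow_le; lra).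
  rewrite <- Rpow_mult_distr.
  destruct (Rle_dec x y).
  - assert ((c * (x + y)) ^ m <= (c * 2 * y) ^ m) by (apply pow_incr; split; nra).
    rewrite !Rpow_mult_distr in *. nra.
  - assert ((c * (x + y)) ^ m <= (c * 2 * x) ^ m) by (apply pow_incr; split; nra).
    rewrite !Rpow_mult_distr in *. nra.
Qed.

Lemma freq_split b j k : freq true j = freq b k - freq b (k - j).
Proof. destruct b; unfold freq; rewrite <- minus_IZR; f_equal; lia. Qed.

Lemma bracket_triangle b j k : bracket true j <= bracket b k + bracket b (k - j).
Proof.
  unfold bracket, jbr. rewrite (freq_split b j k).
  pose proof (Rabs_triang (freq b k) (- freq b (k - j))). rewrite Rabs_Ropp in H.
  unfold Rminus. lra.
Qed.

Lemma sob_weight_peetre b m j k :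
  sob_weight true m j <= 2 ^ m * (sob_weight b m k + sob_weight b m (k - j)).
Proof.
  unfold sob_weight.
  pose proof (bracket_ge1 b k); pose proof (bracket_ge1 b (k - j)); pose proof (bracket_ge1 true j).
  eapply Rle_trans; [apply pow_incr; split; [lra|apply bracket_triangle]|].
  pose proof (pow_plus_le (bracket b k) (bracket b (k - j)) 1 m ltac:(lra) ltac:(lra) ltac:(lra)).
  rewrite Rmult_1_l, pow1, Rmult_1_l in H2. exact H2.
Qed.

Lemma bracket_lower b k : 1 + Rabs (IZR k) <= bracket b k.
Proof.
  unfold bracket, jbr. apply Rplus_le_compat_l. rewrite !Rabs_Zabs.
  destruct b; unfold freq; rewrite Rabs_Zabs; apply IZR_le; lia.
Qed.

Definition inv_sq_weight (k : Z) : R := / (1 + Rabs (IZR k)) ^ 2.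

Lemma inv_sq_weight_nonneg : nonneg inv_sq_weight.
Proof.
  intro k. unfold inv_sq_weight. left. apply Rinv_0_lt_compat, pow_lt.
  pose proof (Rabs_pos (IZR k)); lra.
Qed.

(* telescoping against [2 / (n + 1)] *)
Lemma sum_n_inv_sq_le N : sum_n (fun n => / (1 + INR n) ^ 2) N + 2 / (INR N + 2) <= 2.
Proof.
  induction N as [|N IH].
  - rewrite sum_O. simpl. lra.
  - rewrite sum_Sn_R, S_INR. pose proof (pos_INR N).
    assert (0 <= 2 / (INR N + 2) - (/ (1 + (INR N + 1)) ^ 2 + 2 / (INR N + 1 + 2))).
    { replace (2 / (INR N + 2) - (/ (1 + (INR N + 1)) ^ 2 + 2 / (INR N + 1 + 2)))
        with ((INR N + 1) / ((INR N + 2) ^ 2 * (INR N + 3))) by (field; lra).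
      apply Rdiv_le_0_compat; [lra|]. apply Rmult_lt_0_compat; [apply pow_lt|]; lra. }
    lra.
Qed.

Lemma inv_sq_weight_summable : ex_sumZ inv_sq_weight /\ sumZ inv_sq_weight <= 4.
Proof.
  apply sumZ_le_of_window_le; [exact inv_sq_weight_nonneg|].
  intros [|N]; [cbn [window seq map app lsum]; lra|].
  rewrite lsum_window.
  assert (H : forall n, inv_sq_weight (Z.of_nat n) <= / (1 + INR n) ^ 2 /\
                        inv_sq_weight (- Z.of_nat (S n)) <= / (1 + INR n) ^ 2).
  { intro n. unfold inv_sq_weight. rewrite INR_IZR_INZ. pose proof (IZR_le 0 _ (Zle_0_nat n)).
    split.
    - rewrite Rabs_pos_eq; lra.
    - apply Rinv_le_contravar; [apply pow_lt; lra|].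
      apply pow_incr. split; [lra|]. rewrite Rabs_Zabs. apply Rplus_le_compat_l, IZR_le. lia. }
  assert (Hle : forall f g, (forall n, f n <= g n) -> sum_n f N <= sum_n g N).
  { intros f g Hfg. induction N as [|N' IH]; [rewrite !sum_O; apply Hfg|].
    rewrite !sum_Sn_R. specialize (Hfg (S N')). lra. }
  pose proof (Hle _ _ (fun n => proj1 (H n))). pose proof (Hle _ _ (fun n => proj2 (H n))).
  pose proof (sum_n_inv_sq_le N). pose proof (pos_INR N).
  assert (0 <= 2 / (INR N + 2)) by (apply Rdiv_le_0_compat; lra). lra.
Qed.

Lemma inv_sq_sob_weight_le b m k : (1 <= m)%nat -> / sob_weight b m k ^ 2 <= inv_sq_weight k.
Proof.
  intro hm. unfold inv_sq_weight. pose proof (Rabs_pos (IZR k)).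
  apply Rinv_le_contravar; [apply pow_lt; lra|].
  apply pow_incr. split; [lra|].
  eapply Rle_trans; [apply (bracket_lower b)|]. unfold sob_weight.
  replace m with (S (m - 1)) by lia. simpl.
  pose proof (bracket_ge1 b k). pose proof (pow_R1_Rle (bracket b k) (m - 1) H0). nra.
Qed.

Lemma inv_sq_sob_weight_summable b m : (1 <= m)%nat -> ex_sumZ (fun k => / sob_weight b m k ^ 2).
Proof.
  intro hm.
  apply (sumZ_le_compat _ inv_sq_weight); [| |exact (proj1 inv_sq_weight_summable)].
  - intro k. left; apply Rinv_0_lt_compat, pow_lt, sob_weight_pos.
  - intro k. apply inv_sq_sob_weight_le, hm.
Qed.

(** * Convolution estimates *)

Lemma sumZ_reflect_le f k : nonneg f -> ex_sumZ f ->
  ex_sumZ (fun j => f (k - j)%Z) /\ sumZ (fun j => f (k - j)%Z) <= sumZ f.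
Proof. intros Hf Ef. apply (sumZ_comp_inj_le f); auto. intros x y H; lia. Qed.

Lemma sumZ_translate_le f j : nonneg f -> ex_sumZ f ->
  ex_sumZ (fun k => f (k - j)%Z) /\ sumZ (fun k => f (k - j)%Z) <= sumZ f.
Proof. intros Hf Ef. apply (sumZ_comp_inj_le f (fun k => (k - j)%Z)); auto. intros x y H; lia. Qed.

Lemma sumZ_conv_le_mul (u v : Z -> R) : nonneg u -> nonneg v -> ex_sumZ u -> ex_sumZ v ->
  (forall k, ex_sumZ (fun j => u j * v (k - j)%Z)) /\
  ex_sumZ (fun k => sumZ (fun j => u j * v (k - j)%Z)) /\
  sumZ (fun k => sumZ (fun j => u j * v (k - j)%Z)) <= sumZ u * sumZ v.
Proof.
  intros Hu Hv Eu Ev.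
  set (F := fun j k => u j * v (k - j)%Z).
  assert (HF : forall j k, 0 <= F j k) by (intros; apply Rmult_le_pos; auto).
  assert (HFj : forall j, ex_sumZ (F j) /\ sumZ (F j) <= sumZ v * u j).
  { intro j. destruct (sumZ_translate_le v j Hv Ev) as [E1 S1].
    destruct (sumZ_scal (u j) _ E1) as [E2 S2].
    split; [exact E2|]. unfold F. rewrite S2, Rmult_comm. apply Rmult_le_compat_r; auto. }
  destruct (sumZ_scal (sumZ v) _ Eu) as [EV SV].
  destruct (sumZ_le_compat (fun j => sumZ (F j)) (fun j => sumZ v * u j)) as [EF SF];
    [intro j; apply sumZ_nonneg; [intro; auto|apply HFj]|intro j; apply HFj|exact EV|].
  destruct (sumZ_swap_le F HF (fun j => proj1 (HFj j)) EF) as [Ek [E S]].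
  split; [exact Ek|split; [exact E|]]. rewrite SV in SF. unfold F in S, SF. lra.
Qed.

Lemma conv_cauchy_schwarz (a c : Z -> R) k : nonneg a -> nonneg c ->
  ex_sumZ (fun j => a j ^ 2) -> ex_sumZ (fun i => c i ^ 2) ->
  ex_sumZ (fun j => a j * c (k - j)%Z) /\
  sumZ (fun j => a j * c (k - j)%Z) ^ 2 <= sumZ (fun j => a j ^ 2) * sumZ (fun i => c i ^ 2).
Proof.
  intros Ha Hc Ea Ec.
  destruct (sumZ_reflect_le (fun i => c i ^ 2) k (fun _ => pow2_ge_0 _) Ec) as [E1 S1].
  destruct (sumZ_cauchy_schwarz a (fun j => c (k - j)%Z) Ha (fun j => Hc _) Ea E1) as [E2 S2].
  split; auto. eapply Rle_trans; [exact S2|]. apply Rmult_le_compat_l; auto.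
  apply sumZ_nonneg; auto. intro; apply pow2_ge_0.
Qed.

Lemma sumZ_sq_le_of_weighted (L q : Z -> R) : (forall k, 0 < L k) -> nonneg q ->
  ex_sumZ (fun k => / L k ^ 2) -> ex_sumZ (fun k => (L k * q k) ^ 2) ->
  ex_sumZ q /\ sumZ q ^ 2 <= sumZ (fun k => (L k * q k) ^ 2) * sumZ (fun k => / L k ^ 2).
Proof.
  intros HL Hq EZ EB.
  assert (Eq : forall k, L k * q k * / L k = q k) by (intro k; field; specialize (HL k); lra).
  assert (Einv : forall k, (/ L k) ^ 2 = / L k ^ 2) by (intro; rewrite pow_inv; reflexivity).
  destruct (sumZ_cauchy_schwarz (fun k => L k * q k) (fun k => / L k))
    as [E S]; [intro k; specialize (HL k); specialize (Hq k); nra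
              |intro k; left; apply Rinv_0_lt_compat, HL|exact EB|exact (ex_sumZ_ext _ _ (fun k => eq_sym (Einv k)) EZ)|].
  rewrite (sumZ_ext _ _ Eq), (sumZ_ext _ _ Einv) in S.
  split; [exact (ex_sumZ_ext _ _ Eq E)|exact S].
Qed.

Lemma sq_scaled_le_of_split (l c S P Q G L1 A B : R) : 0 < l -> 0 <= S -> 0 <= P -> 0 <= Q ->
  S <= c * (l * P + Q) -> P ^ 2 <= L1 * G -> Q ^ 2 <= A * B ->
  (/ l * S) ^ 2 <= 2 * c ^ 2 * L1 * G + 2 * c ^ 2 * A * B * / l ^ 2.
Proof.
  intros Hl HS HP HQ HSPQ HPG HQAB.
  assert (Hil : 0 < / l) by (apply Rinv_0_lt_compat; lra).
  assert (E1 : / l * S <= c * (P + / l * Q)).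
  { apply Rmult_le_reg_l with l; auto. replace (l * (/ l * S)) with S by (field; lra).
    replace (l * (c * (P + / l * Q))) with (c * (l * P + Q)) by (field; lra). exact HSPQ. }
  assert ((/ l * S) ^ 2 <= 2 * c ^ 2 * (P ^ 2 + (/ l * Q) ^ 2)).
  { apply Rle_trans with ((c * (P + / l * Q)) ^ 2); [apply pow_incr; split; [nra|lra]|].
    assert (0 <= (P - / l * Q) ^ 2) by apply pow2_ge_0. nra. }
  assert ((/ l * Q) ^ 2 <= A * B * / l ^ 2).
  { rewrite Rpow_mult_distr, pow_inv, Rmult_comm.
    apply Rmult_le_compat_r; auto. left; apply Rinv_0_lt_compat, pow_lt; lra. }
  assert (2 * c ^ 2 * (P ^ 2 + (/ l * Q) ^ 2) <= 2 * c ^ 2 * (L1 * G + A * B * / l ^ 2))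
    by (apply Rmult_le_compat_l; [pose proof (pow2_ge_0 c)|]; lra).
  lra.
Qed.

Section WeightedConvolution.

Variables (L Lp : Z -> R) (c : R).
Hypotheses (HL : forall k, 1 <= L k) (HLp : forall j, 1 <= Lp j)
  (Hpeetre : forall j k, Lp j <= c * (L k + L (k - j)))
  (HZ : ex_sumZ (fun k => / L k ^ 2)).

Lemma conv_peetre_split (p q : Z -> R) j k : 0 <= p j -> 0 <= q (k - j)%Z ->
  p j * q (k - j)%Z <= c * (L k * (/ Lp j * p j * q (k - j)%Z) + / Lp j * p j * (L (k - j) * q (k - j)%Z)).
Proof.
  intros Hp Hq. specialize (Hpeetre j k). specialize (HLp j).
  assert (E : p j * q (k - j)%Z = (/ Lp j * p j) * Lp j * q (k - j)%Z) by (field; lra).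
  rewrite E. assert (0 <= / Lp j * p j) by (apply Rmult_le_pos; [left; apply Rinv_0_lt_compat|]; lra).
  assert (0 <= / Lp j * p j * q (k - j)%Z) by (apply Rmult_le_pos; lra). nra.
Qed.

Lemma conv_le_peetre_split (p q : Z -> R) k : nonneg p -> nonneg q ->
  ex_sumZ (fun j => / Lp j * p j * q (k - j)%Z) ->
  ex_sumZ (fun j => / Lp j * p j * (L (k - j) * q (k - j)%Z)) ->
  ex_sumZ (fun j => p j * q (k - j)%Z) /\
  sumZ (fun j => p j * q (k - j)%Z) <=
    c * (L k * sumZ (fun j => / Lp j * p j * q (k - j)%Z) + sumZ (fun j => / Lp j * p j * (L (k - j) * q (k - j)%Z))).
Proof.
  intros Hp Hq EP EQ.
  destruct (sumZ_scal (L k) _ EP) as [E3 S3].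
  destruct (sumZ_plus _ _ E3 EQ) as [E4 S4].
  destruct (sumZ_scal c _ E4) as [E5 S5].
  destruct (sumZ_le_compat (fun j => p j * q (k - j)%Z) _ (fun j => Rmult_le_pos _ _ (Hp j) (Hq _))
    (fun j => conv_peetre_split p q j k (Hp j) (Hq _)) E5) as [E6 S6].
  split; [exact E6|]. rewrite S5, S4, S3 in S6. exact S6.
Qed.

(* The Peetre splitting puts the weight of [j] either on the output frequency [k], where the
   convolution of [p / Lp] with [q] (an l1 sequence) is controlled, or on [k - j], where the
   convolution of two l2 sequences is bounded pointwise. *)
Lemma conv_weighted_l2_bound (p q : Z -> R) : nonneg p -> nonneg q ->
  ex_sumZ (fun j => (/ Lp j * p j) ^ 2) -> ex_sumZ (fun i => (L i * q i) ^ 2) ->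
  (forall k, ex_sumZ (fun j => p j * q (k - j)%Z)) /\
  ex_sumZ (fun k => (/ L k * sumZ (fun j => p j * q (k - j)%Z)) ^ 2) /\
  sumZ (fun k => (/ L k * sumZ (fun j => p j * q (k - j)%Z)) ^ 2) <=
   4 * c ^ 2 * sumZ (fun k => / L k ^ 2) * sumZ (fun j => (/ Lp j * p j) ^ 2) * sumZ (fun i => (L i * q i) ^ 2).
Proof.
  intros Hp Hq EA EB.
  set (A := sumZ (fun j => (/ Lp j * p j) ^ 2)).
  set (B := sumZ (fun i => (L i * q i) ^ 2)).
  set (Zb := sumZ (fun k => / L k ^ 2)).
  set (a := fun j => / Lp j * p j). set (bb := fun i => L i * q i).
  assert (Lpos : forall k, 0 < L k) by (intro k; specialize (HL k); lra).
  assert (Ha : nonneg a) by (intro j; apply Rmult_le_pos; [left; apply Rinv_0_lt_compat; specialize (HLp j)|]; auto; lra).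
  assert (Hbb : nonneg bb) by (intro j; apply Rmult_le_pos; [specialize (Lpos j); lra|auto]).
  assert (HA0 : 0 <= A) by (apply sumZ_nonneg; auto; intro; apply pow2_ge_0).
  assert (HB0 : 0 <= B) by (apply sumZ_nonneg; auto; intro; apply pow2_ge_0).
  assert (HZ0 : 0 <= Zb) by (apply sumZ_nonneg; auto; intro k; left; apply Rinv_0_lt_compat, pow_lt, Lpos).
  destruct (sumZ_sq_le_of_weighted L q Lpos Hq HZ EB) as [Eq Sq].
  set (L1 := sumZ q) in *. fold B Zb in Sq.
  assert (HL10 : 0 <= L1) by (apply sumZ_nonneg; auto).
  destruct (sumZ_conv_le_mul (fun j => a j ^ 2) q (fun _ => pow2_ge_0 _) Hq EA Eq) as [EG [EGs SGs]].
  assert (HP : forall k, ex_sumZ (fun j => a j * q (k - j)%Z) /\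
     sumZ (fun j => a j * q (k - j)%Z) ^ 2 <= sumZ (fun j => a j ^ 2 * q (k - j)%Z) * L1).
  { intro k. destruct (sumZ_reflect_le q k Hq Eq) as [E1 S1].
    destruct (sumZ_cauchy_schwarz_mass a (fun j => q (k - j)%Z) Ha (fun j => Hq _) (EG k) E1) as [E2 S2].
    split; auto. eapply Rle_trans; [exact S2|]. apply Rmult_le_compat_l; auto.
    apply sumZ_nonneg; [intro j; apply Rmult_le_pos; [apply pow2_ge_0|auto]|apply EG]. }
  assert (HQ : forall k, ex_sumZ (fun j => a j * bb (k - j)%Z) /\ sumZ (fun j => a j * bb (k - j)%Z) ^ 2 <= A * B)
    by (intro k; exact (conv_cauchy_schwarz a bb k Ha Hbb EA EB)).
  assert (HS : forall k, ex_sumZ (fun j => p j * q (k - j)%Z) /\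
     sumZ (fun j => p j * q (k - j)%Z) <= c * (L k * sumZ (fun j => a j * q (k - j)%Z) + sumZ (fun j => a j * bb (k - j)%Z)))
    by (intro k; exact (conv_le_peetre_split p q k Hp Hq (proj1 (HP k)) (proj1 (HQ k)))).
  assert (HT : forall k, (/ L k * sumZ (fun j => p j * q (k - j)%Z)) ^ 2 <=
      2 * c ^ 2 * L1 * sumZ (fun j => a j ^ 2 * q (k - j)%Z) + 2 * c ^ 2 * A * B * / L k ^ 2).
  { intro k. destruct (HS k) as [E1 S1]. destruct (HP k) as [EP SP]. destruct (HQ k) as [EQ SQ].
    apply (sq_scaled_le_of_split _ _ _ (sumZ (fun j => a j * q (k - j)%Z)) (sumZ (fun j => a j * bb (k - j)%Z)));
      auto.
    - apply sumZ_nonneg; [intro j; apply Rmult_le_pos; auto|exact E1].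
    - apply sumZ_nonneg; [intro j; apply Rmult_le_pos; auto|exact EP].
    - apply sumZ_nonneg; [intro j; apply Rmult_le_pos; auto|exact EQ].
    - rewrite Rmult_comm. exact SP. }
  destruct (sumZ_scal (2 * c ^ 2 * L1) _ EGs) as [Eh1 Sh1].
  destruct (sumZ_scal (2 * c ^ 2 * A * B) _ HZ) as [Eh2 Sh2].
  destruct (sumZ_plus _ _ Eh1 Eh2) as [Eh Sh].
  destruct (sumZ_le_compat _ _ (fun k => pow2_ge_0 _) HT Eh) as [ET ST].
  split; [intro k; apply HS|split; [exact ET|]].
  eapply Rle_trans; [exact ST|]. rewrite Sh, Sh1, Sh2. fold Zb.
  assert (0 <= c ^ 2) by apply pow2_ge_0.
  (* [L1 * sum_k G k <= L1^2 A <= A B Zb] *)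
  assert (L1 * sumZ (fun k => sumZ (fun j => a j ^ 2 * q (k - j)%Z)) <= A * B * Zb).
  { apply Rle_trans with (L1 * (A * L1)); [apply Rmult_le_compat_l; [lra|exact SGs]|]. nra. }
  nra.
Qed.

End WeightedConvolution.

Lemma conv_young_l1_l2 (p q : Z -> R) : nonneg p -> nonneg q -> ex_sumZ p -> ex_sumZ (fun i => q i ^ 2) ->
  (forall k, ex_sumZ (fun j => p j * q (k - j)%Z)) /\
  ex_sumZ (fun k => sumZ (fun j => p j * q (k - j)%Z) ^ 2) /\
  sumZ (fun k => sumZ (fun j => p j * q (k - j)%Z) ^ 2) <= sumZ p ^ 2 * sumZ (fun i => q i ^ 2).
Proof.
  intros Hp Hq Ep Eq.
  set (Q := sumZ (fun i => q i ^ 2)). set (P1 := sumZ p).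
  assert (HP0 : 0 <= P1) by (apply sumZ_nonneg; auto).
  destruct (sumZ_conv_le_mul p (fun i => q i ^ 2) Hp (fun _ => pow2_ge_0 _) Ep Eq) as [EG [EGs SGs]].
  fold P1 Q in SGs.
  assert (HS : forall k, ex_sumZ (fun j => p j * q (k - j)%Z) /\
     sumZ (fun j => p j * q (k - j)%Z) ^ 2 <= P1 * sumZ (fun j => p j * q (k - j)%Z ^ 2)).
  { intro k.
    assert (Ecomm : forall (f g : Z -> R), (fun j => f j * g j) = (fun j => g j * f j))
      by (intros f g; apply functional_extensionality; intro; ring).
    pose proof (sumZ_cauchy_schwarz_mass (fun j => q (k - j)%Z) p (fun j => Hq _) Hp) as H. cbv beta in H.
    rewrite (Ecomm (fun j => q (k - j)%Z ^ 2) p), (Ecomm (fun j => q (k - j)%Z) p) in H.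
    destruct (H (EG k) Ep) as [E S]. split; [exact E|]. rewrite Rmult_comm. exact S. }
  destruct (sumZ_scal P1 _ EGs) as [Eh Sh].
  destruct (sumZ_le_compat _ _ (fun k => pow2_ge_0 _) (fun k => proj2 (HS k)) Eh) as [ET ST].
  split; [intro k; apply HS|split; [exact ET|]].
  eapply Rle_trans; [exact ST|]. rewrite Sh.
  replace (P1 ^ 2 * Q) with (P1 * (P1 * Q)) by ring. apply Rmult_le_compat_l; auto.
Qed.

Lemma Cmod_conv_le W z k : ex_sumZ (fun j => Cmod (W j) * Cmod (z (k - j)%Z)) ->
  abs_summable (fun j => Cmult (W j) (z (k - j)%Z)) /\
  Cmod (conv W z k) <= 2 * sumZ (fun j => Cmod (W j) * Cmod (z (k - j)%Z)).
Proof.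
  intro H.
  assert (HA : abs_summable (fun j => Cmult (W j) (z (k - j)%Z))).
  { apply (abs_summable_le _ (fun j => Cmod (W j) * Cmod (z (k - j)%Z))); [| |exact H].
    - intro j. apply Rmult_le_pos; apply Cmod_ge_0.
    - intro j. rewrite Cmod_mult. lra. }
  split; [exact HA|]. unfold conv.
  rewrite <- (sumZ_ext (fun j => Cmod (Cmult (W j) (z (k - j)%Z))) (fun j => Cmod (W j) * Cmod (z (k - j)%Z)))
    by (intro; apply Cmod_mult).
  exact (Cmod_sumZC_le _ HA).
Qed.

Lemma l2w_conv_le w W z : nonneg w ->
  (forall k, ex_sumZ (fun j => Cmod (W j) * Cmod (z (k - j)%Z))) ->
  ex_sumZ (fun k => (w k * sumZ (fun j => Cmod (W j) * Cmod (z (k - j)%Z))) ^ 2) ->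
  (forall k, abs_summable (fun j => Cmult (W j) (z (k - j)%Z))) /\ in_l2w w (conv W z) /\
  l2w_norm2 w (conv W z) <= 4 * sumZ (fun k => (w k * sumZ (fun j => Cmod (W j) * Cmod (z (k - j)%Z))) ^ 2).
Proof.
  intros Hw Hpt E.
  assert (Hk : forall k, (w k * Cmod (conv W z k)) ^ 2 <=
                4 * (w k * sumZ (fun j => Cmod (W j) * Cmod (z (k - j)%Z))) ^ 2).
  { intro k. destruct (Cmod_conv_le W z k (Hpt k)) as [_ H].
    specialize (Hw k). pose proof (Cmod_ge_0 (conv W z k)).
    replace (4 * (w k * sumZ (fun j => Cmod (W j) * Cmod (z (k - j)%Z))) ^ 2)
      with ((2 * (w k * sumZ (fun j => Cmod (W j) * Cmod (z (k - j)%Z)))) ^ 2) by ring.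
    apply pow_incr. split; [apply Rmult_le_pos; lra|]. nra. }
  destruct (sumZ_scal 4 _ E) as [E4 S4].
  destruct (sumZ_le_compat _ _ (fun k => pow2_ge_0 _) Hk E4) as [E' S'].
  split; [intro k; exact (proj1 (Cmod_conv_le W z k (Hpt k)))|].
  split; [exact E'|]. unfold l2w_norm2. rewrite <- S4. exact S'.
Qed.

Definition conv_const (b : bool) (m : nat) : R := 16 * (2 ^ m) ^ 2 * sumZ (fun k => / sob_weight b m k ^ 2).

Lemma conv_const_nonneg b m : (1 <= m)%nat -> 0 <= conv_const b m.
Proof.
  intro hm. unfold conv_const. apply Rmult_le_pos; [apply Rmult_le_pos; [lra|apply pow2_ge_0]|].
  apply sumZ_nonneg; [|apply inv_sq_sob_weight_summable; auto].
  intro k. left; apply Rinv_0_lt_compat, pow_lt, sob_weight_pos.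
Qed.

Lemma conv_sobolev_bound b m W z : (1 <= m)%nat ->
  in_l2w (inv_sob_weight true m) W -> in_l2w (sob_weight b m) z ->
  (forall k, abs_summable (fun j => Cmult (W j) (z (k - j)%Z))) /\
  in_l2w (inv_sob_weight b m) (conv W z) /\
  l2w_norm2 (inv_sob_weight b m) (conv W z) <=
    conv_const b m * l2w_norm2 (inv_sob_weight true m) W * l2w_norm2 (sob_weight b m) z.
Proof.
  intros hm HW Hz.
  destruct (conv_weighted_l2_bound (sob_weight b m) (sob_weight true m) (2 ^ m)
     (sob_weight_ge1 b m) (sob_weight_ge1 true m) (sob_weight_peetre b m)
     (inv_sq_sob_weight_summable b m hm) (fun j => Cmod (W j)) (fun i => Cmod (z i))
     (fun _ => Cmod_ge_0 _) (fun _ => Cmod_ge_0 _) HW Hz) as [E1 [E2 S2]].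
  destruct (l2w_conv_le (inv_sob_weight b m) W z (inv_sob_weight_nonneg b m) E1 E2) as [Ha [E S]].
  split; [exact Ha|split; [exact E|]].
  eapply Rle_trans; [exact S|]. unfold conv_const, l2w_norm2, inv_sob_weight in *. lra.
Qed.

Lemma conv_l1_l2_bound (W x : Z -> C) : ex_sumZ (fun j => Cmod (W j)) -> in_l2w unit_weight x ->
  (forall k, abs_summable (fun j => Cmult (W j) (x (k - j)%Z))) /\
  in_l2w unit_weight (conv W x) /\
  l2w_norm2 unit_weight (conv W x) <= 4 * sumZ (fun j => Cmod (W j)) ^ 2 * l2w_norm2 unit_weight x.
Proof.
  intros HW Hx.
  assert (E1 : forall f : Z -> R, (fun k => (unit_weight k * f k) ^ 2) = (fun k => f k ^ 2))
    by (intro f; apply functional_extensionality; intro; unfold unit_weight; ring).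
  unfold in_l2w, l2w_norm2 in *. rewrite E1 in Hx. rewrite !E1.
  destruct (conv_young_l1_l2 (fun j => Cmod (W j)) (fun i => Cmod (x i)) (fun _ => Cmod_ge_0 _)
    (fun _ => Cmod_ge_0 _) HW Hx) as [Ep [E2 S2]].
  pose proof (l2w_conv_le unit_weight W x unit_weight_nonneg Ep) as H.
  unfold in_l2w, l2w_norm2 in H. rewrite !E1 in H. destruct (H E2) as [Ha [E S]].
  split; [exact Ha|split; [exact E|lra]].
Qed.

Lemma conv_plus_r W x y k : abs_summable (fun j => Cmult (W j) (x (k - j)%Z)) ->
  abs_summable (fun j => Cmult (W j) (y (k - j)%Z)) ->
  conv W (fun i => Cplus (x i) (y i)) k = Cplus (conv W x k) (conv W y k).
Proof.
  intros Hx Hy. unfold conv. rewrite <- (sumZC_plus _ _ Hx Hy).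
  f_equal. apply functional_extensionality. intro j. apply injective_projections; simpl; ring.
Qed.

Lemma conv_minus_r W x y k : abs_summable (fun j => Cmult (W j) (x (k - j)%Z)) ->
  abs_summable (fun j => Cmult (W j) (y (k - j)%Z)) ->
  conv W (fun i => Cminus (x i) (y i)) k = Cminus (conv W x k) (conv W y k).
Proof.
  intros Hx Hy. unfold conv. rewrite <- (sumZC_minus _ _ Hx Hy).
  f_equal. apply functional_extensionality. intro j. apply injective_projections; simpl; ring.
Qed.

Lemma conv_plus_l W1 W2 x k : abs_summable (fun j => Cmult (W1 j) (x (k - j)%Z)) ->
  abs_summable (fun j => Cmult (W2 j) (x (k - j)%Z)) ->
  conv (fun j => Cplus (W1 j) (W2 j)) x k = Cplus (conv W1 x k) (conv W2 x k).
Proof.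
  intros Hx Hy. unfold conv. rewrite <- (sumZC_plus _ _ Hx Hy).
  f_equal. apply functional_extensionality. intro j. apply injective_projections; simpl; ring.
Qed.

Lemma conv_minus_l W1 W2 x k : abs_summable (fun j => Cmult (W1 j) (x (k - j)%Z)) ->
  abs_summable (fun j => Cmult (W2 j) (x (k - j)%Z)) ->
  conv (fun j => Cminus (W1 j) (W2 j)) x k = Cminus (conv W1 x k) (conv W2 x k).
Proof.
  intros Hx Hy. unfold conv. rewrite <- (sumZC_minus _ _ Hx Hy).
  f_equal. apply functional_extensionality. intro j. apply injective_projections; simpl; ring.
Qed.

(** * The free resolvent and the contraction estimate *)

Lemma symb_nonneg b m k : 0 <= symb b m k.
Proof. unfold symb. rewrite pow_mult. apply pow_le, pow2_ge_0. Qed.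

Lemma sob_weight_sq_le_symb b m k lam : 1 <= lam -> sob_weight b m k ^ 2 <= 4 ^ m * (symb b m k + lam).
Proof.
  intro Hl. unfold sob_weight, symb, bracket, jbr.
  set (v := freq b k).
  rewrite <- pow_mult, Nat.mul_comm, !pow_mult.
  assert (H1 : (1 + Rabs v) ^ 2 <= 2 * (1 + v ^ 2)).
  { rewrite <- (pow2_abs v). pose proof (Rabs_pos v). assert (0 <= (1 - Rabs v) ^ 2) by apply pow2_ge_0. nra. }
  assert (H2 : ((1 + Rabs v) ^ 2) ^ m <= 2 ^ m * (1 + v ^ 2) ^ m)
    by (rewrite <- Rpow_mult_distr; apply pow_incr; split; [apply pow2_ge_0|auto]).
  pose proof (pow_plus_le 1 (v ^ 2) 1 m ltac:(lra) (pow2_ge_0 v) ltac:(lra)) as H.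
  rewrite Rmult_1_l, !pow1, !Rmult_1_l in H.
  assert (H3 : (v ^ 2) ^ m <= ((v * PI) ^ 2) ^ m).
  { apply pow_incr. split; [apply pow2_ge_0|]. rewrite Rpow_mult_distr.
    pose proof PI2_1. pose proof (pow2_ge_0 v). assert (1 <= PI ^ 2) by nra. nra. }
  assert (0 <= 2 ^ m) by (apply pow_le; lra).
  replace (4 ^ m) with (2 ^ m * 2 ^ m) by (rewrite <- Rpow_mult_distr; f_equal; lra).
  assert (2 ^ m * (1 + v ^ 2) ^ m <= 2 ^ m * (2 ^ m * (1 + ((v * PI) ^ 2) ^ m)))
    by (apply Rmult_le_compat_l; [|eapply Rle_trans; [exact H|apply Rmult_le_compat_l]]; lra).
  assert (0 <= 2 ^ m * 2 ^ m) by (apply Rmult_le_pos; auto). nra.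
Qed.

Definition free_resolvent (b : bool) (m : nat) (lam : R) (d : Z -> C) : Z -> C :=
  fun k => Cmult (RtoC (/ (symb b m k + lam))) (d k).

Lemma Cmod_free_resolvent b m lam d k : 1 <= lam ->
  Cmod (free_resolvent b m lam d k) = Cmod (d k) / (symb b m k + lam).
Proof.
  intro H. unfold free_resolvent. rewrite Cmod_mult, Cmod_R. pose proof (symb_nonneg b m k).
  rewrite Rabs_pos_eq; [unfold Rdiv; ring|]. left; apply Rinv_0_lt_compat; lra.
Qed.

Lemma Cmod_free_resolvent_le b m lam y k : 1 <= lam -> Cmod (free_resolvent b m lam y k) <= Cmod (y k).
Proof.
  intro Hl. rewrite Cmod_free_resolvent by auto. pose proof (symb_nonneg b m k). pose proof (Cmod_ge_0 (y k)).
  apply Rmult_le_reg_r with (symb b m k + lam); [lra|]. field_simplify; nra.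
Qed.

Lemma free_resolvent_plus b m lam x y k :
  free_resolvent b m lam (fun i => Cplus (x i) (y i)) k = Cplus (free_resolvent b m lam x k) (free_resolvent b m lam y k).
Proof. unfold free_resolvent. apply injective_projections; simpl; ring. Qed.

Lemma free_resolvent_H_minus_to_H b m lam d : 1 <= lam -> in_l2w (inv_sob_weight b m) d ->
  in_l2w (sob_weight b m) (free_resolvent b m lam d) /\
  l2w_norm2 (sob_weight b m) (free_resolvent b m lam d) <= 16 ^ m * l2w_norm2 (inv_sob_weight b m) d.
Proof.
  intros Hl Hd. apply l2w_le; auto; [apply pow_le; lra|].
  intro k. rewrite Cmod_free_resolvent by auto. unfold inv_sob_weight.
  pose proof (sob_weight_sq_le_symb b m k lam Hl). pose proof (symb_nonneg b m k).
  pose proof (sob_weight_pos b m k). pose proof (Cmod_ge_0 (d k)).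
  set (L := sob_weight b m k) in *. set (s := symb b m k + lam) in *. set (c := Cmod (d k)) in *.
  assert (0 < s) by (unfold s; lra).
  replace ((L * (c / s)) ^ 2) with ((L ^ 2 / s) ^ 2 * (/ L * c) ^ 2) by (field; lra).
  apply Rmult_le_compat_r; [apply pow2_ge_0|].
  replace (16 ^ m) with ((4 ^ m) ^ 2) by (rewrite <- pow_mult, Nat.mul_comm, pow_mult; f_equal; lra).
  apply pow_incr. split; [apply Rdiv_le_0_compat; [apply pow2_ge_0|lra]|].
  apply Rmult_le_reg_r with s; [lra|]. replace (L ^ 2 / s * s) with (L ^ 2) by (field; lra). exact H.
Qed.

Lemma free_resolvent_L2_to_H b m lam y : 1 <= lam -> in_l2w unit_weight y ->
  in_l2w (sob_weight b m) (free_resolvent b m lam y) /\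
  l2w_norm2 (sob_weight b m) (free_resolvent b m lam y) <= (4 ^ m / lam) * l2w_norm2 unit_weight y.
Proof.
  intros Hl Hy. apply l2w_le; auto; [apply Rdiv_le_0_compat; [apply pow_le|]; lra|].
  intro k. rewrite Cmod_free_resolvent by auto. unfold unit_weight.
  pose proof (sob_weight_sq_le_symb b m k lam Hl). pose proof (symb_nonneg b m k).
  pose proof (sob_weight_pos b m k). pose proof (Cmod_ge_0 (y k)).
  set (L := sob_weight b m k) in *. set (s := symb b m k + lam) in *. set (c := Cmod (y k)) in *.
  assert (lam <= s) by (unfold s; lra).
  replace ((L * (c / s)) ^ 2) with ((L ^ 2 / s) / s * c ^ 2) by (field; lra).
  replace (1 * c) with c by ring.
  apply Rmult_le_compat_r; [apply pow2_ge_0|].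
  assert (L ^ 2 / s <= 4 ^ m)
    by (apply Rmult_le_reg_r with s; [lra|]; replace (L ^ 2 / s * s) with (L ^ 2) by (field; lra); exact H).
  assert (0 <= 4 ^ m) by (apply pow_le; lra).
  unfold Rdiv. apply Rmult_le_compat; auto; [apply Rdiv_le_0_compat; [apply pow2_ge_0|lra]
    |left; apply Rinv_0_lt_compat; lra|apply Rinv_le_contravar; lra].
Qed.

Lemma l2_le_sob b m x : in_l2w (sob_weight b m) x ->
  in_l2w unit_weight x /\ l2w_norm2 unit_weight x <= l2w_norm2 (sob_weight b m) x.
Proof.
  intro H. pose proof (l2w_le unit_weight (sob_weight b m) x x 1 ltac:(lra) H) as H0.
  rewrite Rmult_1_l in H0. apply H0.
  intro k. unfold unit_weight. rewrite Rmult_1_l, !Rpow_mult_distr. pose proof (sob_weight_ge1 b m k).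
  assert (1 <= sob_weight b m k ^ 2) by (apply pow_R1_Rle; auto). pose proof (pow2_ge_0 (Cmod (x k))). nra.
Qed.

Lemma l2w_le_of_Cmod_le w W V : nonneg w -> in_l2w w V -> (forall j, Cmod (W j) <= Cmod (V j)) ->
  in_l2w w W /\ l2w_norm2 w W <= l2w_norm2 w V.
Proof.
  intros Hw HV H. pose proof (l2w_le w w W V 1 ltac:(lra) HV) as H0. rewrite Rmult_1_l in H0. apply H0.
  intro j. rewrite Rmult_1_l. apply pow_incr. specialize (Hw j). specialize (H j).
  split; [apply Rmult_le_pos; [|apply Cmod_ge_0]|apply Rmult_le_compat_l]; auto.
Qed.

(** * Splitting the potential into low and high frequencies *)

Definition low_freq (J : nat) (W : Z -> C) : Z -> C :=
  fun j => if Z_le_dec (Z.abs j) (Z.of_nat J) then W j else RtoC 0.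
Definition high_freq (J : nat) (W : Z -> C) : Z -> C :=
  fun j => if Z_le_dec (Z.abs j) (Z.of_nat J) then RtoC 0 else W j.

Lemma low_high_freq_split J W j : W j = Cplus (low_freq J W j) (high_freq J W j).
Proof. unfold low_freq, high_freq. destruct (Z_le_dec _ _); apply injective_projections; simpl; ring. Qed.

Lemma Cmod_low_freq_le J W j : Cmod (low_freq J W j) <= Cmod (W j).
Proof. unfold low_freq. destruct (Z_le_dec _ _); [lra|]. rewrite Cmod_R, Rabs_R0. apply Cmod_ge_0. Qed.

Lemma Cmod_high_freq_le J W j : Cmod (high_freq J W j) <= Cmod (W j).
Proof. unfold high_freq. destruct (Z_le_dec _ _); [|lra]. rewrite Cmod_R, Rabs_R0. apply Cmod_ge_0. Qed.

Definition low_freq_const (J m : nat) : R := (1 + 2 * INR J) ^ (S m).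

Lemma low_freq_const_nonneg J m : 0 <= low_freq_const J m.
Proof. unfold low_freq_const. apply pow_le. pose proof (pos_INR J). lra. Qed.

Lemma bracket_le_of_abs_le J j : (Z.abs j <= Z.of_nat J)%Z -> bracket true j <= 1 + 2 * INR J.
Proof.
  intro H. unfold bracket, jbr, freq. apply Rplus_le_compat_l. rewrite Rabs_Zabs, INR_IZR_INZ.
  rewrite <- mult_IZR. apply IZR_le. lia.
Qed.

Lemma low_freq_l1 m J W : in_l2w (inv_sob_weight true m) W ->
  ex_sumZ (fun j => Cmod (low_freq J W j)) /\
  sumZ (fun j => Cmod (low_freq J W j)) ^ 2 <= low_freq_const J m ^ 2 * 4 * l2w_norm2 (inv_sob_weight true m) W.
Proof.
  intro HW.
  set (x := fun j => inv_sob_weight true m j * Cmod (W j)).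
  set (y := fun j => / bracket true j).
  assert (Hx : nonneg x) by (intro j; apply Rmult_le_pos; [apply inv_sob_weight_nonneg|apply Cmod_ge_0]).
  assert (Hy : nonneg y) by (intro j; left; apply Rinv_0_lt_compat; pose proof (bracket_ge1 true j); lra).
  assert (Hy2 : forall j, y j ^ 2 <= inv_sq_weight j).
  { intro j. unfold y, inv_sq_weight. rewrite pow_inv. pose proof (Rabs_pos (IZR j)).
    apply Rinv_le_contravar; [apply pow_lt; lra|].
    apply pow_incr. split; [lra|apply bracket_lower]. }
  destruct (sumZ_le_compat _ _ (fun j => pow2_ge_0 (y j)) Hy2 (proj1 inv_sq_weight_summable)) as [Ey Sy].
  destruct (sumZ_cauchy_schwarz x y Hx Hy HW Ey) as [Exy Sxy].
  pose proof (low_freq_const_nonneg J m) as HK.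
  assert (Hpt : forall j, Cmod (low_freq J W j) <= low_freq_const J m * (x j * y j)).
  { intro j. unfold low_freq. destruct (Z_le_dec _ _) as [Hj|Hj].
    - pose proof (bracket_le_of_abs_le J j Hj). pose proof (bracket_ge1 true j).
      unfold x, y, inv_sob_weight, sob_weight, low_freq_const. pose proof (Cmod_ge_0 (W j)).
      set (e := bracket true j) in *. set (c := Cmod (W j)). set (K := 1 + 2 * INR J) in *.
      assert (0 < e ^ m) by (apply pow_lt; lra).
      assert (e ^ S m <= K ^ S m) by (apply pow_incr; lra).
      assert (0 < e ^ S m) by (apply pow_lt; lra).
      replace (K ^ S m * (/ e ^ m * c * / e)) with (c * (K ^ S m / e ^ S m)) by (simpl; field; lra).
      rewrite <- (Rmult_1_r c) at 1. apply Rmult_le_compat_l; [apply Cmod_ge_0|].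
      apply Rmult_le_reg_r with (e ^ S m); auto. field_simplify; lra.
    - rewrite Cmod_R, Rabs_R0. apply Rmult_le_pos; auto. apply Rmult_le_pos; auto. }
  destruct (sumZ_scal (low_freq_const J m) _ Exy) as [E1 S1].
  destruct (sumZ_le_compat _ _ (fun j => Cmod_ge_0 _) Hpt E1) as [E2 S2].
  split; [exact E2|]. rewrite S1 in S2.
  assert (0 <= sumZ (fun j => Cmod (low_freq J W j))) by (apply sumZ_nonneg; auto; intro; apply Cmod_ge_0).
  eapply Rle_trans; [apply pow_incr; split; [exact H|exact S2]|]. rewrite Rpow_mult_distr.
  rewrite Rmult_assoc. apply Rmult_le_compat_l; [apply pow2_ge_0|].
  eapply Rle_trans; [exact Sxy|]. rewrite Rmult_comm. apply Rmult_le_compat_r.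
  - apply sumZ_nonneg; auto. intro; apply pow2_ge_0.
  - pose proof (proj2 inv_sq_weight_summable). lra.
Qed.

(* [admissible b m W J lam]: cutting [W] at frequency [J] and shifting by [lam] makes
   [z |-> free_resolvent (W * z)] a [1/8]-contraction of [H^m_b] (see below); the high
   frequencies are handled by smallness in [H^{-m}], the low ones by the factor [1 / lam]. *)
Definition admissible (b : bool) (m : nat) (W : Z -> C) (J : nat) (lam : R) : Prop :=
  in_l2w (inv_sob_weight true m) W /\ 1 <= lam /\
  2 * 16 ^ m * conv_const b m * l2w_norm2 (inv_sob_weight true m) (high_freq J W) <= 1 / 16 /\
  2 * (4 ^ m / lam) * 4 * (low_freq_const J m ^ 2 * 4 * l2w_norm2 (inv_sob_weight true m) W) <= 1 / 16.

Lemma resolvent_conv_high_bound b m W J lam x : (1 <= m)%nat -> 1 <= lam ->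
  in_l2w (inv_sob_weight true m) W -> in_l2w (sob_weight b m) x ->
  in_l2w (sob_weight b m) (free_resolvent b m lam (conv (high_freq J W) x)) /\
  l2w_norm2 (sob_weight b m) (free_resolvent b m lam (conv (high_freq J W) x)) <=
    16 ^ m * conv_const b m * l2w_norm2 (inv_sob_weight true m) (high_freq J W) * l2w_norm2 (sob_weight b m) x.
Proof.
  intros hm Hl HW Hx.
  destruct (l2w_le_of_Cmod_le _ _ _ (inv_sob_weight_nonneg true m) HW (Cmod_high_freq_le J W)) as [EH _].
  destruct (conv_sobolev_bound b m _ x hm EH Hx) as [_ [Ec Sc]].
  destruct (free_resolvent_H_minus_to_H b m lam _ Hl Ec) as [E S].
  split; [exact E|]. eapply Rle_trans; [exact S|].
  rewrite !Rmult_assoc. apply Rmult_le_compat_l; [apply pow_le; lra|]. rewrite <- !Rmult_assoc. exact Sc.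
Qed.

Lemma resolvent_conv_low_bound b m W J lam x : 1 <= lam ->
  in_l2w (inv_sob_weight true m) W -> in_l2w (sob_weight b m) x ->
  (forall k, abs_summable (fun j => Cmult (low_freq J W j) (x (k - j)%Z))) /\
  in_l2w (sob_weight b m) (free_resolvent b m lam (conv (low_freq J W) x)) /\
  l2w_norm2 (sob_weight b m) (free_resolvent b m lam (conv (low_freq J W) x)) <=
    (4 ^ m / lam) * 4 * (low_freq_const J m ^ 2 * 4 * l2w_norm2 (inv_sob_weight true m) W) * l2w_norm2 (sob_weight b m) x.
Proof.
  intros Hl HW Hx.
  destruct (low_freq_l1 m J W HW) as [El1 Sl1].
  destruct (l2_le_sob b m x Hx) as [Ex0 Sx0].
  destruct (conv_l1_l2_bound (low_freq J W) x El1 Ex0) as [Ha [Ec Sc]].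
  destruct (free_resolvent_L2_to_H b m lam _ Hl Ec) as [E S].
  split; [exact Ha|split; [exact E|]]. eapply Rle_trans; [exact S|].
  assert (0 <= 4 ^ m / lam) by (apply Rdiv_le_0_compat; [apply pow_le|]; lra).
  assert (l2w_norm2 unit_weight (conv (low_freq J W) x) <=
          4 * (low_freq_const J m ^ 2 * 4 * l2w_norm2 (inv_sob_weight true m) W) * l2w_norm2 (sob_weight b m) x).
  { assert (sumZ (fun j => Cmod (low_freq J W j)) ^ 2 * l2w_norm2 unit_weight x <=
            low_freq_const J m ^ 2 * 4 * l2w_norm2 (inv_sob_weight true m) W * l2w_norm2 (sob_weight b m) x)
      by (apply Rmult_le_compat; [apply pow2_ge_0|apply l2w_norm2_nonneg; exact Ex0|exact Sl1|exact Sx0]).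
    lra. }
  apply Rle_trans with (4 ^ m / lam * (4 * (low_freq_const J m ^ 2 * 4 * l2w_norm2 (inv_sob_weight true m) W)
    * l2w_norm2 (sob_weight b m) x)); [apply Rmult_le_compat_l; lra|right; ring].
Qed.

Lemma resolvent_conv_contraction b m W J lam x : (1 <= m)%nat -> admissible b m W J lam ->
  in_l2w (sob_weight b m) x ->
  (forall k, abs_summable (fun j => Cmult (W j) (x (k - j)%Z))) /\
  in_l2w (sob_weight b m) (free_resolvent b m lam (conv W x)) /\
  l2w_norm2 (sob_weight b m) (free_resolvent b m lam (conv W x)) <= 1 / 8 * l2w_norm2 (sob_weight b m) x.
Proof.
  intros hm [HW [Hl [Hhigh Hlow]]] Hx.
  destruct (conv_sobolev_bound b m W x hm HW Hx) as [Ha _].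
  destruct (l2w_le_of_Cmod_le _ _ _ (inv_sob_weight_nonneg true m) HW (Cmod_high_freq_le J W)) as [EH _].
  destruct (conv_sobolev_bound b m _ x hm EH Hx) as [HaH _].
  destruct (resolvent_conv_low_bound b m W J lam x Hl HW Hx) as [HaL [EL SL]].
  destruct (resolvent_conv_high_bound b m W J lam x hm Hl HW Hx) as [EH' SH].
  destruct (l2w_plus _ _ _ (sob_weight_nonneg b m) EL EH') as [E S].
  assert (Hsplit : forall k, Cplus (free_resolvent b m lam (conv (low_freq J W) x) k)
      (free_resolvent b m lam (conv (high_freq J W) x) k) = free_resolvent b m lam (conv W x) k).
  { intro k. rewrite <- free_resolvent_plus. unfold free_resolvent. f_equal.
    rewrite <- conv_plus_l by auto. unfold conv. f_equal.
    apply functional_extensionality. intro j. rewrite <- low_high_freq_split. reflexivity. }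
  destruct (l2w_ext _ _ _ Hsplit E) as [E' S'].
  split; [exact Ha|split; [exact E'|]]. rewrite S'.
  pose proof (l2w_norm2_nonneg _ _ Hx).
  assert (Hc : 0 <= conv_const b m) by (apply conv_const_nonneg; auto).
  assert (0 <= l2w_norm2 (inv_sob_weight true m) (high_freq J W)) by (apply l2w_norm2_nonneg; auto).
  assert (0 <= 16 ^ m) by (apply pow_le; lra).
  set (X := l2w_norm2 (sob_weight b m) x) in *.
  assert (2 * (16 ^ m * conv_const b m * l2w_norm2 (inv_sob_weight true m) (high_freq J W)) * X <= 1 / 16 * X)
    by (apply Rmult_le_compat_r; lra).
  assert (2 * (4 ^ m / lam * 4 * (low_freq_const J m ^ 2 * 4 * l2w_norm2 (inv_sob_weight true m) W)) * X <= 1 / 16 * X)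
    by (apply Rmult_le_compat_r; lra).
  lra.
Qed.

(** * Solving [(D^{2m} + lam + W) z = d] by Picard iteration *)

Lemma Cauchy_crit_of_bound (u g : nat -> R) : (forall n p, Rabs (u (n + p)%nat - u n) <= g n) ->
  (forall e, 0 < e -> exists N, g N < e) -> Cauchy_crit u.
Proof.
  intros H Hg e He. destruct (Hg (e / 2) ltac:(lra)) as [N HN]. exists N.
  intros a c Ha Hc. unfold Rdist.
  pose proof (H N (a - N)%nat). pose proof (H N (c - N)%nat).
  replace (N + (a - N))%nat with a in H0 by lia. replace (N + (c - N))%nat with c in H1 by lia.
  replace (u a - u c) with ((u a - u N) - (u c - u N)) by ring.
  eapply Rle_lt_trans; [apply Rabs_triang|]. rewrite Rabs_Ropp. lra.
Qed.

Lemma Rabs_lim_minus_le (u : nat -> R) l n B : Un_cv u l ->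
  (forall n', (n' >= n)%nat -> Rabs (u n' - u n) <= B) -> Rabs (l - u n) <= B.
Proof.
  intros Hc Hb. apply Rnot_lt_le. intro H.
  destruct (Hc (Rabs (l - u n) - B) ltac:(lra)) as [N HN].
  specialize (HN (max N n) ltac:(lia)). specialize (Hb (max N n) ltac:(lia)). unfold Rdist in HN.
  pose proof (Rabs_triang (l - u (max N n)) (u (max N n) - u n)).
  replace (l - u (max N n) + (u (max N n) - u n)) with (l - u n) in H0 by ring.
  rewrite Rabs_minus_sym in HN. lra.
Qed.

Lemma sqrt_geometric_small K eps : 0 <= K -> 0 < eps ->
  exists N, forall n, (n >= N)%nat -> sqrt ((1 / 8) ^ n * K) < eps.
Proof.
  intros HK He.
  assert (Hy : 0 < eps * eps / (K + 1)) by (apply Rdiv_lt_0_compat; nra).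
  destruct (pow_lt_1_zero (1/8) ltac:(rewrite Rabs_pos_eq; lra) _ Hy) as [N HN].
  exists N. intros n Hn. specialize (HN n Hn). rewrite Rabs_pos_eq in HN by (apply pow_le; lra).
  pose proof (pow_le (1/8) n ltac:(lra)).
  rewrite <- (sqrt_square eps) by lra. apply sqrt_lt_1; [nra|nra|].
  apply Rle_lt_trans with (eps * eps / (K + 1) * K); [apply Rmult_le_compat_r; lra|].
  replace (eps * eps / (K + 1) * K) with (eps * eps * (K / (K + 1))) by (field; lra).
  assert (K / (K + 1) < 1) by (apply Rmult_lt_reg_r with (K + 1); [lra|field_simplify; lra]).
  assert (0 < eps * eps) by nra. nra.
Qed.

Lemma resolvent_equation_iff (s : R) (z c d : C) : s <> 0 ->
  Cplus (Cmult (RtoC s) z) c = d <-> z = Cminus (Cmult (RtoC (/ s)) d) (Cmult (RtoC (/ s)) c).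
Proof.
  intro Hs. split; intro H; [rewrite <- H|rewrite H]; apply injective_projections; simpl; field; auto.
Qed.

Section PicardIteration.

Variables (b : bool) (m : nat) (W : Z -> C) (J : nat) (lam : R).
Hypotheses (hm : (1 <= m)%nat) (HG : admissible b m W J lam).

Lemma admissible_lam : 1 <= lam.
Proof. apply HG. Qed.

Lemma fixed_point_of_resolvent_equation z d k :
  Cplus (Cmult (RtoC (symb b m k + lam)) (z k)) (conv W z k) = d k ->
  z k = Cminus (free_resolvent b m lam d k) (free_resolvent b m lam (conv W z) k).
Proof.
  apply resolvent_equation_iff. pose proof (symb_nonneg b m k). pose proof admissible_lam. lra.
Qed.

Lemma resolvent_apriori z d : in_l2w (sob_weight b m) z -> in_l2w (inv_sob_weight b m) d ->
  (forall k, Cplus (Cmult (RtoC (symb b m k + lam)) (z k)) (conv W z k) = d k) ->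
  l2w_norm2 (sob_weight b m) z <= 4 * 16 ^ m * l2w_norm2 (inv_sob_weight b m) d.
Proof.
  intros Hz Hd Heq.
  destruct (free_resolvent_H_minus_to_H b m lam d admissible_lam Hd) as [E1 S1].
  destruct (resolvent_conv_contraction b m W J lam z hm HG Hz) as [_ [E2 S2]].
  destruct (l2w_minus (sob_weight b m) _ _ (sob_weight_nonneg b m) E1 E2) as [E3 S3].
  destruct (l2w_ext _ _ z (fun k => eq_sym (fixed_point_of_resolvent_equation z d k (Heq k))) E3) as [_ S4].
  rewrite <- S4 in S3. pose proof (l2w_norm2_nonneg _ _ Hd). pose proof (l2w_norm2_nonneg _ _ Hz). lra.
Qed.

Variable d : Z -> C.
Hypothesis Hd : in_l2w (inv_sob_weight b m) d.

Definition picard (z : Z -> C) : Z -> C :=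
  fun k => Cminus (free_resolvent b m lam d k) (free_resolvent b m lam (conv W z) k).

Fixpoint picard_iter (n : nat) : Z -> C :=
  match n with O => fun _ => RtoC 0 | S n' => picard (picard_iter n') end.

Definition picard_bound : R := 4 * 16 ^ m * l2w_norm2 (inv_sob_weight b m) d.

Lemma picard_bound_nonneg : 0 <= picard_bound.
Proof. unfold picard_bound. pose proof (l2w_norm2_nonneg _ _ Hd). pose proof (pow_le 16 m ltac:(lra)). nra. Qed.

Lemma picard_sob z : in_l2w (sob_weight b m) z ->
  in_l2w (sob_weight b m) (picard z) /\
  l2w_norm2 (sob_weight b m) (picard z) <= 2 * 16 ^ m * l2w_norm2 (inv_sob_weight b m) d + 1 / 4 * l2w_norm2 (sob_weight b m) z.
Proof.
  intro Hz.
  destruct (free_resolvent_H_minus_to_H b m lam d admissible_lam Hd) as [E1 S1].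
  destruct (resolvent_conv_contraction b m W J lam z hm HG Hz) as [_ [E2 S2]].
  destruct (l2w_minus (sob_weight b m) _ _ (sob_weight_nonneg b m) E1 E2) as [E3 S3].
  split; [exact E3|]. unfold picard. lra.
Qed.

Lemma picard_iter_bound n : in_l2w (sob_weight b m) (picard_iter n) /\ l2w_norm2 (sob_weight b m) (picard_iter n) <= picard_bound.
Proof.
  pose proof picard_bound_nonneg.
  induction n as [|n [IH1 IH2]]; simpl.
  - destruct (l2w_zero (sob_weight b m)) as [E S]. rewrite S. auto.
  - destruct (picard_sob _ IH1) as [E S]. split; auto. unfold picard_bound in *. lra.
Qed.

Lemma picard_minus z1 z2 k : in_l2w (sob_weight b m) z1 -> in_l2w (sob_weight b m) z2 ->
  Cminus (picard z1 k) (picard z2 k) = free_resolvent b m lam (conv W (fun i => Cminus (z2 i) (z1 i))) k.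
Proof.
  intros H1 H2.
  destruct (resolvent_conv_contraction b m W J lam z1 hm HG H1) as [X1 _].
  destruct (resolvent_conv_contraction b m W J lam z2 hm HG H2) as [X2 _].
  unfold picard, free_resolvent. rewrite conv_minus_r by auto.
  apply injective_projections; simpl; ring.
Qed.

Lemma picard_iter_minus n p :
  in_l2w (sob_weight b m) (fun k => Cminus (picard_iter (n + p) k) (picard_iter n k)) /\
  l2w_norm2 (sob_weight b m) (fun k => Cminus (picard_iter (n + p) k) (picard_iter n k)) <= (1 / 8) ^ n * picard_bound.
Proof.
  revert p. induction n as [|n IH]; intro p.
  - simpl (0 + p)%nat. destruct (picard_iter_bound p) as [E Sb].
    assert (Hext : forall k, picard_iter p k = Cminus (picard_iter p k) (picard_iter 0 k))
      by (intro k; simpl; apply injective_projections; simpl; ring).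
    destruct (l2w_ext _ _ _ Hext E) as [E' S']. split; [exact E'|]. rewrite S'. simpl. lra.
  - destruct (IH p) as [En Sn].
    destruct (picard_iter_bound (n + p)) as [Ea _]. destruct (picard_iter_bound n) as [Eb _].
    destruct (l2w_minus (sob_weight b m) _ _ (sob_weight_nonneg b m) Eb Ea) as [Ex _].
    destruct (resolvent_conv_contraction b m W J lam _ hm HG Ex) as [_ [E2 S2]].
    assert (Hext : forall k, free_resolvent b m lam (conv W (fun i => Cminus (picard_iter n i) (picard_iter (n + p) i))) k =
                              Cminus (picard_iter (S n + p) k) (picard_iter (S n) k))
      by (intro k; simpl; rewrite picard_minus; auto).
    destruct (l2w_ext _ _ _ Hext E2) as [E3 S3]. split; [exact E3|]. rewrite S3.
    rewrite l2w_norm2_minus_sym in S2.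
    pose proof picard_bound_nonneg. pose proof (pow_le (1 / 8) n ltac:(lra)). simpl. nra.
Qed.

Definition picard_rate (n : nat) : R := sqrt ((1 / 8) ^ n * picard_bound).

Lemma picard_rate_small e : 0 < e -> exists N, forall n, (n >= N)%nat -> picard_rate n < e.
Proof. intro He. apply sqrt_geometric_small; auto. apply picard_bound_nonneg. Qed.

Lemma Cmod_picard_iter_minus n p k : Cmod (Cminus (picard_iter (n + p) k) (picard_iter n k)) <= picard_rate n.
Proof.
  destruct (picard_iter_minus n p) as [E S].
  eapply Rle_trans; [apply (Cmod_le_sqrt_l2w_norm2 _ _ k (sob_weight_ge1 b m k) E)|].
  apply sqrt_le_1_alt. exact S.
Qed.

Lemma picard_iter_re_cauchy k : Cauchy_crit (fun n => fst (picard_iter n k)).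
Proof.
  apply (Cauchy_crit_of_bound _ picard_rate).
  - intros n p. eapply Rle_trans; [|apply (Cmod_picard_iter_minus n p k)].
    apply (re_le_Cmod (Cminus (picard_iter (n + p) k) (picard_iter n k))).
  - intros e He. destruct (picard_rate_small e He) as [N HN]. exists N. apply HN. lia.
Qed.

Lemma picard_iter_im_cauchy k : Cauchy_crit (fun n => snd (picard_iter n k)).
Proof.
  apply (Cauchy_crit_of_bound _ picard_rate).
  - intros n p. eapply Rle_trans; [|apply (Cmod_picard_iter_minus n p k)].
    apply (im_le_Cmod (Cminus (picard_iter (n + p) k) (picard_iter n k))).
  - intros e He. destruct (picard_rate_small e He) as [N HN]. exists N. apply HN. lia.
Qed.

Definition picard_lim : Z -> C := fun k =>
  (proj1_sig (Rcomplete.R_complete _ (picard_iter_re_cauchy k)),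
   proj1_sig (Rcomplete.R_complete _ (picard_iter_im_cauchy k))).

Lemma Cmod_picard_lim_minus n k : Cmod (Cminus (picard_lim k) (picard_iter n k)) <= 2 * picard_rate n.
Proof.
  eapply Rle_trans; [apply Cmod_le_Re_Im|].
  assert (Hpt : forall n', (n' >= n)%nat -> Cmod (Cminus (picard_iter n' k) (picard_iter n k)) <= picard_rate n).
  { intros n' Hn'. replace n' with (n + (n' - n))%nat by lia. apply Cmod_picard_iter_minus. }
  assert (Hre := Rabs_lim_minus_le (fun n => fst (picard_iter n k)) _ n (picard_rate n)
    (proj2_sig (Rcomplete.R_complete _ (picard_iter_re_cauchy k)))
    (fun n' Hn' => Rle_trans _ _ _ (re_le_Cmod _) (Hpt n' Hn'))).
  assert (Him := Rabs_lim_minus_le (fun n => snd (picard_iter n k)) _ n (picard_rate n)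
    (proj2_sig (Rcomplete.R_complete _ (picard_iter_im_cauchy k)))
    (fun n' Hn' => Rle_trans _ _ _ (im_le_Cmod _) (Hpt n' Hn'))).
  unfold picard_lim, Re, Im. simpl in *. unfold Rminus in *. lra.
Qed.

Lemma picard_lim_sob : in_l2w (sob_weight b m) picard_lim /\ l2w_norm2 (sob_weight b m) picard_lim <= 2 * picard_bound.
Proof.
  apply (l2w_of_uniform_approx _ _ picard_iter picard_bound (sob_weight_nonneg b m) picard_iter_bound).
  intros e He. destruct (picard_rate_small (e / 2) ltac:(lra)) as [N HN]. exists N. intro k.
  pose proof (Cmod_picard_lim_minus N k). specialize (HN N (le_n _)). lra.
Qed.

Lemma picard_lim_minus n : in_l2w (sob_weight b m) (fun k => Cminus (picard_lim k) (picard_iter n k)) /\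
  l2w_norm2 (sob_weight b m) (fun k => Cminus (picard_lim k) (picard_iter n k)) <= 2 * ((1 / 8) ^ n * picard_bound).
Proof.
  apply (l2w_of_uniform_approx _ _ (fun p k => Cminus (picard_iter (n + p) k) (picard_iter n k))
    ((1 / 8) ^ n * picard_bound) (sob_weight_nonneg b m) (fun p => picard_iter_minus n p)).
  intros e He. destruct (picard_rate_small (e / 2) ltac:(lra)) as [N HN]. exists N. intro k.
  replace (Cminus (Cminus (picard_lim k) (picard_iter n k)) (Cminus (picard_iter (n + N) k) (picard_iter n k)))
    with (Cminus (picard_lim k) (picard_iter (n + N) k)) by (apply injective_projections; simpl; ring).
  pose proof (Cmod_picard_lim_minus (n + N) k). specialize (HN (n + N)%nat ltac:(lia)). lra.
Qed.

Lemma picard_lim_defect_le k n :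
  Cmod (Cminus (picard_lim k) (picard picard_lim k)) <=
  2 * picard_rate (S n) + sqrt ((1 / 8) ^ n * (sob_weight b m k ^ 2 *
    (conv_const b m * l2w_norm2 (inv_sob_weight true m) W * (2 * picard_bound)))).
Proof.
  destruct picard_lim_sob as [Ez _]. destruct (picard_iter_bound n) as [En _].
  destruct (picard_lim_minus n) as [Ed Sd].
  replace (Cminus (picard_lim k) (picard picard_lim k)) with
    (Cplus (Cminus (picard_lim k) (picard_iter (S n) k)) (Cminus (picard (picard_iter n) k) (picard picard_lim k)))
    by (simpl; apply injective_projections; simpl; ring).
  eapply Rle_trans; [apply Cmod_triangle|]. apply Rplus_le_compat; [apply Cmod_picard_lim_minus|].
  rewrite picard_minus by auto. eapply Rle_trans; [apply Cmod_free_resolvent_le, admissible_lam|].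
  destruct HG as [HW _].
  destruct (conv_sobolev_bound b m W _ hm HW Ed) as [_ [Ec Sc]].
  pose proof (l2w_norm2_ge_term _ _ k Ec) as Hs.
  set (c := Cmod (conv W (fun i => Cminus (picard_lim i) (picard_iter n i)) k)) in *.
  pose proof (sob_weight_pos b m k) as HL. pose proof (Cmod_ge_0 (conv W (fun i => Cminus (picard_lim i) (picard_iter n i)) k)).
  rewrite <- (sqrt_pow2 c) by auto. apply sqrt_le_1_alt.
  replace (c ^ 2) with (sob_weight b m k ^ 2 * (inv_sob_weight b m k * c) ^ 2)
    by (unfold inv_sob_weight; field; lra).
  replace ((1 / 8) ^ n * (sob_weight b m k ^ 2 * (conv_const b m * l2w_norm2 (inv_sob_weight true m) W * (2 * picard_bound))))
    with (sob_weight b m k ^ 2 * (conv_const b m * l2w_norm2 (inv_sob_weight true m) W * (2 * ((1 / 8) ^ n * picard_bound))))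
    by ring.
  apply Rmult_le_compat_l; [apply pow2_ge_0|].
  eapply Rle_trans; [exact Hs|]. eapply Rle_trans; [exact Sc|].
  apply Rmult_le_compat_l; [|exact Sd].
  apply Rmult_le_pos; [apply conv_const_nonneg, hm|apply l2w_norm2_nonneg, HW].
Qed.

Lemma picard_lim_fixed k : picard_lim k = picard picard_lim k.
Proof.
  set (K := sob_weight b m k ^ 2 * (conv_const b m * l2w_norm2 (inv_sob_weight true m) W * (2 * picard_bound))).
  assert (HK : 0 <= K).
  { destruct HG as [HW _]. pose proof picard_bound_nonneg. pose proof (conv_const_nonneg b m hm).
    pose proof (l2w_norm2_nonneg _ _ HW). apply Rmult_le_pos; [apply pow2_ge_0|].
    apply Rmult_le_pos; [apply Rmult_le_pos|]; lra. }
  assert (H0 : Cmod (Cminus (picard_lim k) (picard picard_lim k)) = 0).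
  { apply Rle_antisym; [|apply Cmod_ge_0]. apply Rnot_lt_le. intro Hpos.
    set (e := Cmod (Cminus (picard_lim k) (picard picard_lim k))) in *.
    destruct (picard_rate_small (e / 4) ltac:(lra)) as [N1 H1].
    destruct (sqrt_geometric_small K (e / 4) HK ltac:(lra)) as [N2 H2].
    pose proof (picard_lim_defect_le k (max N1 N2)) as Hb. fold K e in Hb.
    specialize (H1 (S (max N1 N2)) ltac:(lia)). specialize (H2 (max N1 N2) ltac:(lia)).
    lra. }
  apply Cmod_eq_0 in H0.
  replace (picard_lim k) with (Cplus (Cminus (picard_lim k) (picard picard_lim k)) (picard picard_lim k))
    by (apply injective_projections; simpl; ring).
  rewrite H0. apply injective_projections; simpl; ring.
Qed.

End PicardIteration.

Lemma resolvent_solution b m W J lam d : (1 <= m)%nat -> admissible b m W J lam ->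
  in_l2w (inv_sob_weight b m) d ->
  exists z, in_l2w (sob_weight b m) z /\
    l2w_norm2 (sob_weight b m) z <= 8 * 16 ^ m * l2w_norm2 (inv_sob_weight b m) d /\
    forall k, Cplus (Cmult (RtoC (symb b m k + lam)) (z k)) (conv W z k) = d k.
Proof.
  intros hm HG Hd. exists (picard_lim b m W J lam hm HG d Hd).
  destruct (picard_lim_sob b m W J lam hm HG d Hd) as [E S].
  split; [exact E|split; [unfold picard_bound in S; lra|]].
  intro k. apply resolvent_equation_iff.
  - pose proof (symb_nonneg b m k). pose proof (admissible_lam b m W J lam HG). lra.
  - rewrite (picard_lim_fixed b m W J lam hm HG d Hd k) at 1. reflexivity.
Qed.

(** * Graphs of the operators *)

Lemma sob_terms_pos b m u : sob_terms b (Z.of_nat m) u = fun k => (sob_weight b m k * Cmod (u k)) ^ 2.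
Proof.
  apply functional_extensionality; intro k. unfold sob_terms, sob_weight, bracket.
  replace (2 * Z.of_nat m)%Z with (Z.of_nat (2 * m)) by lia.
  rewrite <- pow_powerRZ, Rpow_mult_distr, <- pow_mult, Nat.mul_comm. reflexivity.
Qed.

Lemma sob_terms_neg b m u : sob_terms b (- Z.of_nat m) u = fun k => (inv_sob_weight b m k * Cmod (u k)) ^ 2.
Proof.
  apply functional_extensionality; intro k. unfold sob_terms, inv_sob_weight, sob_weight, bracket.
  replace (2 * - Z.of_nat m)%Z with (- Z.of_nat (2 * m))%Z by lia.
  rewrite powerRZ_neg', <- pow_powerRZ, Rpow_mult_distr, pow_inv, <- pow_mult, Nat.mul_comm. reflexivity.
Qed.

Lemma in_H_pos_iff b m u : in_H b (Z.of_nat m) u <-> in_l2w (sob_weight b m) u.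
Proof. unfold in_H, in_l2w. rewrite sob_terms_pos. tauto. Qed.

Lemma in_H_neg_iff b m u : in_H b (- Z.of_nat m) u <-> in_l2w (inv_sob_weight b m) u.
Proof. unfold in_H, in_l2w. rewrite sob_terms_neg. tauto. Qed.

Lemma H_norm_neg b m u : H_norm b (- Z.of_nat m) u = sqrt (l2w_norm2 (inv_sob_weight b m) u).
Proof. unfold H_norm, l2w_norm2. rewrite sob_terms_neg. reflexivity. Qed.

Lemma unit_weight_terms (u : Z -> C) : (fun k => Cmod (u k) ^ 2) = (fun k => (unit_weight k * Cmod (u k)) ^ 2).
Proof. apply functional_extensionality; intro k. unfold unit_weight. ring. Qed.

Lemma in_L2_iff u : in_L2 u <-> in_l2w unit_weight u.
Proof. unfold in_L2, in_l2w. rewrite unit_weight_terms. tauto. Qed.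

Lemma graph_norm_eq u f : graph_norm u f = sqrt (l2w_norm2 unit_weight u + l2w_norm2 unit_weight f).
Proof. unfold graph_norm, l2w_norm2. rewrite !unit_weight_terms. reflexivity. Qed.

Lemma graph_norm_1 b m V u f : S_graph b m V u f -> graph_norm u f = 1 ->
  l2w_norm2 unit_weight u + l2w_norm2 unit_weight f = 1.
Proof.
  intros [Hu [Hf _]] Hn. rewrite graph_norm_eq in Hn.
  apply in_H_pos_iff in Hu. apply in_L2_iff in Hf.
  destruct (l2_le_sob b m u Hu) as [Hu1 _].
  pose proof (l2w_norm2_nonneg _ _ Hu1). pose proof (l2w_norm2_nonneg _ _ Hf).
  rewrite <- (pow2_sqrt (l2w_norm2 unit_weight u + l2w_norm2 unit_weight f)) by lra. rewrite Hn. ring.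
Qed.

Lemma shifted_rhs_H_minus b m lam u f : 1 <= lam ->
  in_l2w unit_weight u -> in_l2w unit_weight f ->
  in_l2w (inv_sob_weight b m) (fun k => Cplus (f k) (Cmult (RtoC lam) (u k))) /\
  l2w_norm2 (inv_sob_weight b m) (fun k => Cplus (f k) (Cmult (RtoC lam) (u k))) <=
    2 * (1 + lam ^ 2) * (l2w_norm2 unit_weight u + l2w_norm2 unit_weight f).
Proof.
  intros Hl Hu Hf.
  destruct (sumZ_scal 2 _ Hf) as [Ea Sa].
  destruct (sumZ_scal (2 * lam ^ 2) _ Hu) as [Eb Sb].
  destruct (sumZ_plus _ _ Ea Eb) as [Ec Sc].
  assert (Hpt : forall k, (inv_sob_weight b m k * Cmod (Cplus (f k) (Cmult (RtoC lam) (u k)))) ^ 2 <=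
      2 * (unit_weight k * Cmod (f k)) ^ 2 + 2 * lam ^ 2 * (unit_weight k * Cmod (u k)) ^ 2).
  { intro k. unfold unit_weight, inv_sob_weight. pose proof (sob_weight_ge1 b m k).
    assert (0 < / sob_weight b m k <= 1)
      by (split; [apply Rinv_0_lt_compat; lra|rewrite <- Rinv_1; apply Rinv_le_contravar; lra]).
    pose proof (Cmod_ge_0 (f k)). pose proof (Cmod_ge_0 (u k)).
    pose proof (Cmod_ge_0 (Cplus (f k) (Cmult (RtoC lam) (u k)))).
    assert (Cmod (Cplus (f k) (Cmult (RtoC lam) (u k))) <= Cmod (f k) + lam * Cmod (u k)).
    { eapply Rle_trans; [apply Cmod_triangle|]. rewrite Cmod_mult, Cmod_R, Rabs_pos_eq by lra. lra. }
    pose proof (sq_le_of_le_add (/ sob_weight b m k * Cmod (Cplus (f k) (Cmult (RtoC lam) (u k))))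
      (Cmod (f k)) (lam * Cmod (u k)) ltac:(nra) ltac:(lra) ltac:(nra) ltac:(nra)). nra. }
  destruct (sumZ_le_compat _ _ (fun _ => pow2_ge_0 _) Hpt Ec) as [Ed Sd].
  split; [exact Ed|]. unfold l2w_norm2. rewrite Sc, Sa, Sb in Sd.
  pose proof (l2w_norm2_nonneg _ _ Hu). pose proof (l2w_norm2_nonneg _ _ Hf).
  unfold l2w_norm2 in *. assert (0 <= lam ^ 2) by apply pow2_ge_0. nra.
Qed.

Lemma graph_perturb b m W1 W2 u f z lam : (1 <= m)%nat ->
  in_l2w (inv_sob_weight true m) W1 -> in_l2w (inv_sob_weight true m) W2 ->
  S_graph b m W1 u f -> in_l2w (sob_weight b m) z ->
  (forall k, Cplus (Cmult (RtoC (symb b m k + lam)) (z k)) (conv W2 z k) =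
             conv (fun j => Cminus (W1 j) (W2 j)) u k) ->
  S_graph b m W2 (fun k => Cplus (u k) (z k)) (fun k => Cminus (f k) (Cmult (RtoC lam) (z k))).
Proof.
  intros hm HW1 HW2 [Hu [Hf Heq]] Hz Heqz.
  apply in_H_pos_iff in Hu. apply in_L2_iff in Hf.
  destruct (conv_sobolev_bound b m W1 u hm HW1 Hu) as [X1u _].
  destruct (conv_sobolev_bound b m W2 u hm HW2 Hu) as [X2u _].
  destruct (conv_sobolev_bound b m W2 z hm HW2 Hz) as [X2z _].
  destruct (l2_le_sob b m z Hz) as [Hz1 _].
  split; [|split].
  - apply in_H_pos_iff. exact (proj1 (l2w_plus _ _ _ (sob_weight_nonneg b m) Hu Hz)).
  - apply in_L2_iff.
    destruct (l2w_le unit_weight unit_weight (fun k => Cmult (RtoC lam) (z k)) z (lam ^ 2) (pow2_ge_0 _) Hz1)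
      as [Elz _].
    { intro k. unfold unit_weight. rewrite Cmod_mult, Cmod_R, <- (pow2_abs lam). right; ring. }
    exact (proj1 (l2w_minus _ _ _ unit_weight_nonneg Hf Elz)).
  - intro k. rewrite conv_plus_r by auto.
    specialize (Heqz k). rewrite conv_minus_l in Heqz by auto. rewrite Heq.
    apply injective_projections;
      [pose proof (f_equal fst Heqz) as H1|pose proof (f_equal snd Heqz) as H1]; simpl in *; lra.
Qed.

Lemma graph_perturb_dist u f z lam : in_l2w unit_weight z ->
  l2w_norm2 unit_weight (fun k => Cminus (u k) (Cplus (u k) (z k))) +
  l2w_norm2 unit_weight (fun k => Cminus (f k) (Cminus (f k) (Cmult (RtoC lam) (z k)))) =
  (1 + lam ^ 2) * l2w_norm2 unit_weight z.
Proof.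
  intro Hz.
  assert (E1 : l2w_norm2 unit_weight (fun k => Cminus (u k) (Cplus (u k) (z k))) = l2w_norm2 unit_weight z).
  { apply sumZ_ext. intro k. replace (Cminus (u k) (Cplus (u k) (z k))) with (Copp (z k))
      by (apply injective_projections; simpl; ring). rewrite Cmod_opp. reflexivity. }
  assert (E2 : l2w_norm2 unit_weight (fun k => Cminus (f k) (Cminus (f k) (Cmult (RtoC lam) (z k)))) =
               lam ^ 2 * l2w_norm2 unit_weight z).
  { unfold l2w_norm2. rewrite <- (proj2 (sumZ_scal (lam ^ 2) _ Hz)). apply sumZ_ext. intro k.
    replace (Cminus (f k) (Cminus (f k) (Cmult (RtoC lam) (z k)))) with (Cmult (RtoC lam) (z k))
      by (apply injective_projections; simpl; ring).
    rewrite Cmod_mult, Cmod_R, <- (pow2_abs lam). unfold unit_weight. ring. }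
  rewrite E1, E2. ring.
Qed.

Definition gap_const (b : bool) (m : nat) (lam : R) : R :=
  (1 + lam ^ 2) * (8 * 16 ^ m) * conv_const b m * (8 * 16 ^ m * (1 + lam ^ 2)).

Definition graph_approx (M N : (Z -> C) -> (Z -> C) -> Prop) (r : R) : Prop :=
  forall u f, M u f -> graph_norm u f = 1 -> exists w g, N w g /\ graph_dist u f w g <= sqrt r.

Lemma gap_step b m W1 W2 J lam : (1 <= m)%nat ->
  admissible b m W1 J lam -> admissible b m W2 J lam ->
  graph_approx (S_graph b m W1) (S_graph b m W2)
    (gap_const b m lam * l2w_norm2 (inv_sob_weight true m) (fun j => Cminus (W1 j) (W2 j))).
Proof.
  intros hm G1 G2 u f Hg Hn.
  pose proof (graph_norm_1 _ _ _ _ _ Hg Hn) as Hn1.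
  pose proof Hg as [Hu [Hf Heq]].
  apply in_H_pos_iff in Hu. apply in_L2_iff in Hf.
  pose proof G1 as [HW1 [Hl _]]. pose proof G2 as [HW2 _].
  destruct (l2_le_sob b m u Hu) as [Hu1 _].
  destruct (shifted_rhs_H_minus b m lam u f Hl Hu1 Hf) as [Ed Sd]. rewrite Hn1, Rmult_1_r in Sd.
  assert (Hequ : forall k, Cplus (Cmult (RtoC (symb b m k + lam)) (u k)) (conv W1 u k) =
                            Cplus (f k) (Cmult (RtoC lam) (u k)))
    by (intro k; rewrite Heq; apply injective_projections; simpl; ring).
  pose proof (resolvent_apriori b m W1 J lam hm G1 u _ Hu Ed Hequ) as Hap.
  destruct (l2w_minus _ _ _ (inv_sob_weight_nonneg true m) HW1 HW2) as [HW12 _].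
  destruct (conv_sobolev_bound b m _ u hm HW12 Hu) as [_ [Ee Se]].
  destruct (resolvent_solution b m W2 J lam _ hm G2 Ee) as [z [Hz [Sz Heqz]]].
  exists (fun k => Cplus (u k) (z k)), (fun k => Cminus (f k) (Cmult (RtoC lam) (z k))).
  split; [exact (graph_perturb b m W1 W2 u f z lam hm HW1 HW2 Hg Hz Heqz)|].
  unfold graph_dist. rewrite graph_norm_eq. apply sqrt_le_1_alt.
  destruct (l2_le_sob b m z Hz) as [Hz1 Sz1].
  rewrite (graph_perturb_dist u f z lam Hz1).
  pose proof (conv_const_nonneg b m hm). pose proof (l2w_norm2_nonneg _ _ HW12).
  pose proof (pow_le 16 m ltac:(lra)). pose proof (pow2_ge_0 lam).
  assert (l2w_norm2 unit_weight z <= 8 * 16 ^ m * (conv_const b m *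
            l2w_norm2 (inv_sob_weight true m) (fun j => Cminus (W1 j) (W2 j)) * (8 * 16 ^ m * (1 + lam ^ 2)))).
  { assert (HU : l2w_norm2 (sob_weight b m) u <= 8 * 16 ^ m * (1 + lam ^ 2)).
    { eapply Rle_trans; [exact Hap|].
      replace (8 * 16 ^ m * (1 + lam ^ 2)) with (4 * 16 ^ m * (2 * (1 + lam ^ 2))) by ring.
      apply Rmult_le_compat_l; lra. }
    eapply Rle_trans; [exact Sz1|]. eapply Rle_trans; [exact Sz|].
    apply Rmult_le_compat_l; [lra|]. eapply Rle_trans; [exact Se|].
    apply Rmult_le_compat_l; [apply Rmult_le_pos; lra|exact HU]. }
  unfold gap_const.
  apply Rle_trans with ((1 + lam ^ 2) * (8 * 16 ^ m * (conv_const b m *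
            l2w_norm2 (inv_sob_weight true m) (fun j => Cminus (W1 j) (W2 j)) * (8 * 16 ^ m * (1 + lam ^ 2)))));
    [apply Rmult_le_compat_l; lra|right; ring].
Qed.

(** * Choice of the cut-off and of the shift *)

Lemma high_freq_tail w V tau : nonneg w -> in_l2w w V -> 0 < tau ->
  exists J, in_l2w w (high_freq J V) /\ l2w_norm2 w (high_freq J V) <= tau.
Proof.
  intros Hw HV Ht.
  set (f := fun j => (w j * Cmod (V j)) ^ 2).
  destruct (sumZ_window_approx f tau (fun _ => pow2_ge_0 _) HV Ht) as [N HN].
  exists N.
  set (fL := fun j => (w j * Cmod (low_freq N V j)) ^ 2).
  set (fH := fun j => (w j * Cmod (high_freq N V j)) ^ 2).
  assert (Hsplit : forall j, f j = fL j + fH j).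
  { intro j. unfold f, fL, fH, low_freq, high_freq. destruct (Z_le_dec _ _); rewrite Cmod_R, Rabs_R0; ring. }
  destruct (l2w_le_of_Cmod_le w _ V Hw HV (Cmod_low_freq_le N V)) as [EL _].
  destruct (l2w_le_of_Cmod_le w _ V Hw HV (Cmod_high_freq_le N V)) as [EH _].
  destruct (sumZ_plus fL fH EL EH) as [_ Sp].
  rewrite <- (sumZ_ext _ _ Hsplit) in Sp.
  assert (Hl : lsum f (window N) = lsum fL (window N)).
  { apply lsum_ext_in. intros x Hx. apply in_window_abs in Hx. unfold f, fL, low_freq.
    destruct (Z_le_dec _ _); [reflexivity|lia]. }
  pose proof (lsum_window_le_sumZ fL N (fun _ => pow2_ge_0 _) EL).
  split; [exact EH|]. unfold l2w_norm2. fold fH. unfold f, fL, fH in *. lra.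
Qed.

Lemma admissible_of_bounds b m W J NV : (1 <= m)%nat -> 0 <= NV ->
  in_l2w (inv_sob_weight true m) W ->
  l2w_norm2 (inv_sob_weight true m) (high_freq J W) <= 4 * (1 / (128 * 16 ^ m * conv_const b m + 1)) ->
  l2w_norm2 (inv_sob_weight true m) W <= 2 * NV + 2 ->
  admissible b m W J (1 + 512 * 4 ^ m * low_freq_const J m ^ 2 * (2 * NV + 2)).
Proof.
  intros hm HNV HW HH HN.
  pose proof (conv_const_nonneg b m hm) as HKc.
  assert (0 <= 16 ^ m) by (apply pow_le; lra). assert (0 <= 4 ^ m) by (apply pow_le; lra).
  assert (0 <= low_freq_const J m ^ 2) by apply pow2_ge_0.
  assert (0 <= l2w_norm2 (inv_sob_weight true m) W) by (apply l2w_norm2_nonneg; auto).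
  set (X := 16 ^ m * conv_const b m) in *.
  assert (HX : 0 <= X) by (unfold X; apply Rmult_le_pos; auto).
  set (Y := 4 ^ m * low_freq_const J m ^ 2 * (2 * NV + 2)).
  assert (HY : 0 <= Y) by (unfold Y; apply Rmult_le_pos; [apply Rmult_le_pos|]; lra).
  replace (1 + 512 * 4 ^ m * low_freq_const J m ^ 2 * (2 * NV + 2)) with (1 + 512 * Y) by (unfold Y; ring).
  split; [exact HW|split; [lra|split]].
  - replace (128 * 16 ^ m * conv_const b m) with (128 * X) in HH by (unfold X; ring).
    replace (2 * 16 ^ m * conv_const b m * l2w_norm2 (inv_sob_weight true m) (high_freq J W))
      with (2 * X * l2w_norm2 (inv_sob_weight true m) (high_freq J W)) by (unfold X; ring).
    assert (2 * X * l2w_norm2 (inv_sob_weight true m) (high_freq J W) <= 2 * X * (4 * (1 / (128 * X + 1))))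
      by (apply Rmult_le_compat_l; lra).
    assert (2 * X * (4 * (1 / (128 * X + 1))) <= 1 / 16)
      by (apply Rmult_le_reg_r with (16 * (128 * X + 1)); [lra|field_simplify; lra]).
    lra.
  - assert (4 ^ m * low_freq_const J m ^ 2 * l2w_norm2 (inv_sob_weight true m) W <= Y)
      by (unfold Y; apply Rmult_le_compat_l; [apply Rmult_le_pos|]; lra).
    replace (2 * (4 ^ m / (1 + 512 * Y)) * 4 * (low_freq_const J m ^ 2 * 4 * l2w_norm2 (inv_sob_weight true m) W))
      with (32 * (4 ^ m * low_freq_const J m ^ 2 * l2w_norm2 (inv_sob_weight true m) W) / (1 + 512 * Y))
      by (field; lra).
    apply Rmult_le_reg_r with (16 * (1 + 512 * Y)); [lra|]. field_simplify; lra.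
Qed.

(* One pair [(J, lam)] thus serves [V] and all [V_n] with [n] large. *)
Lemma admissible_near b m V : (1 <= m)%nat -> in_l2w (inv_sob_weight true m) V ->
  exists J lam delta, 0 < delta /\ forall W, in_l2w (inv_sob_weight true m) W ->
    l2w_norm2 (inv_sob_weight true m) (fun k => Cminus (W k) (V k)) <= delta -> admissible b m W J lam.
Proof.
  intros hm HV.
  set (w := inv_sob_weight true m). pose proof (inv_sob_weight_nonneg true m) as Hw. fold w in Hw, HV.
  set (t0 := 1 / (128 * 16 ^ m * conv_const b m + 1)).
  assert (Ht0 : 0 < t0).
  { unfold t0. apply Rdiv_lt_0_compat; [lra|].
    pose proof (pow_le 16 m ltac:(lra)). pose proof (conv_const_nonneg b m hm). nra. }
  destruct (high_freq_tail w V t0 Hw HV Ht0) as [J [EJ SJ]].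
  set (NV := l2w_norm2 w V). assert (HNV : 0 <= NV) by (apply l2w_norm2_nonneg; auto).
  exists J, (1 + 512 * 4 ^ m * low_freq_const J m ^ 2 * (2 * NV + 2)), (Rmin t0 1).
  split; [apply Rmin_pos; lra|]. intros W HW Hd.
  pose proof (Rmin_l t0 1). pose proof (Rmin_r t0 1).
  destruct (l2w_minus w W V Hw HW HV) as [ED _].
  assert (HWVD : forall (U : Z -> C) k, Cmod (U k) <= Cmod (V k) + Cmod (Cminus (U k) (V k))).
  { intros U k. replace (U k) with (Cplus (V k) (Cminus (U k) (V k))) at 1
      by (apply injective_projections; simpl; ring). apply Cmod_triangle. }
  apply admissible_of_bounds; auto.
  - destruct (l2w_le_of_Cmod_le w _ _ Hw ED (Cmod_high_freq_le J (fun k => Cminus (W k) (V k)))) as [EHD SHD].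
    destruct (l2w_of_Cmod_le_add w _ _ (high_freq J W) Hw EJ EHD) as [_ S].
    { intro k. unfold high_freq. destruct (Z_le_dec _ _); [rewrite Cmod_R, Rabs_R0; lra|apply HWVD]. }
    unfold w, t0 in *. lra.
  - destruct (l2w_of_Cmod_le_add w V _ W Hw HV ED (HWVD W)) as [_ S]. unfold NV, w in *. lra.
Qed.

(** * Generalized convergence *)

Lemma sqrt_lt_of_lt_sq x e : 0 < e -> x < e ^ 2 -> sqrt x < e.
Proof.
  intros He H. destruct (Rle_lt_dec 0 x) as [Hx|Hx].
  - rewrite <- (sqrt_pow2 e) by lra. apply sqrt_lt_1; auto. apply pow2_ge_0.
  - rewrite sqrt_neg_0 by lra. exact He.
Qed.

Lemma gen_conv_of_graph_approx (T : nat -> (Z -> C) -> (Z -> C) -> Prop) (T0 : (Z -> C) -> (Z -> C) -> Prop)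
    (d : nat -> R) (K : R) (N0 : nat) : 0 <= K -> is_lim_seq d 0 ->
  (forall n, (N0 <= n)%nat -> graph_approx (T n) T0 (K * d n) /\ graph_approx T0 (T n) (K * d n)) ->
  gen_conv T T0.
Proof.
  intros HK Hd Happ eps Heps.
  assert (He : 0 < eps ^ 2 / (K + 1)) by (apply Rdiv_lt_0_compat; [apply pow_lt|]; lra).
  apply is_lim_seq_spec in Hd. destruct (Hd (mkposreal _ He)) as [N1 HN1].
  exists (max N0 N1). intros n Hn.
  assert (Hsmall : sqrt (K * d n) < eps).
  { apply sqrt_lt_of_lt_sq; auto. specialize (HN1 n ltac:(lia)). cbv beta in HN1.
    change (pos (mkposreal _ He)) with (eps ^ 2 / (K + 1)) in HN1.
    rewrite Rminus_0_r in HN1. pose proof (Rabs_pos (d n)).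
    assert (K * d n <= K * Rabs (d n)) by (apply Rmult_le_compat_l; [exact HK|apply Rle_abs]).
    apply Rle_lt_trans with ((K + 1) * Rabs (d n)); [nra|].
    apply Rmult_lt_reg_r with (/ (K + 1)); [apply Rinv_0_lt_compat; lra|].
    replace ((K + 1) * Rabs (d n) * / (K + 1)) with (Rabs (d n)) by (field; lra). exact HN1. }
  destruct (Happ n ltac:(lia)) as [H1 H2].
  split; intros u f Hg Hn1 eta Heta;
    [destruct (H1 u f Hg Hn1) as [w [g [Hw Hwg]]]|destruct (H2 u f Hg Hn1) as [w [g [Hw Hwg]]]];
    exists w, g; split; auto; lra.
Qed.

Lemma is_lim_seq_of_sqrt (d : nat -> R) : (forall n, 0 <= d n) ->
  is_lim_seq (fun n => sqrt (d n)) 0 -> is_lim_seq d 0.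
Proof.
  intros Hd H. replace 0 with (0 * 0) by ring.
  apply (is_lim_seq_ext (fun n => sqrt (d n) * sqrt (d n))); [intro n; apply sqrt_sqrt, Hd|].
  exact (is_lim_seq_mult' _ _ _ _ H H).
Qed.

Lemma gap_const_nonneg b m lam : (1 <= m)%nat -> 0 <= gap_const b m lam.
Proof.
  intro hm. unfold gap_const. pose proof (conv_const_nonneg b m hm).
  pose proof (pow_le 16 m ltac:(lra)). pose proof (pow2_ge_0 lam).
  assert (0 <= (1 + lam ^ 2) * (8 * 16 ^ m)) by nra.
  assert (0 <= 8 * 16 ^ m * (1 + lam ^ 2)) by nra.
  apply Rmult_le_pos; [apply Rmult_le_pos|]; assumption.
Qed.

Theorem proposition3 (m : nat) (hm : (1 <= m)%nat)
  (Vs : nat -> Z -> C) (V : Z -> C)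
  (hVs : forall n, in_H true (- Z.of_nat m) (Vs n))
  (hV : in_H true (- Z.of_nat m) V)
  (hlim : is_lim_seq
            (fun n => H_norm true (- Z.of_nat m) (fun k => Cminus (Vs n k) (V k))) 0) :
  forall b : bool, gen_conv (fun n => S_graph b m (Vs n)) (S_graph b m V).
Proof.
  intro b. apply in_H_neg_iff in hV.
  assert (hVs' : forall n, in_l2w (inv_sob_weight true m) (Vs n)) by (intro n; apply in_H_neg_iff, hVs).
  set (dist2 := fun n => l2w_norm2 (inv_sob_weight true m) (fun k => Cminus (Vs n k) (V k))).
  assert (Hd : is_lim_seq dist2 0).
  { apply is_lim_seq_of_sqrt.
    - intro n. apply l2w_norm2_nonneg, l2w_minus; auto. apply inv_sob_weight_nonneg.
    - apply (is_lim_seq_ext _ _ _ (fun n => H_norm_neg true m _) hlim). }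
  destruct (admissible_near b m V hm hV) as [J [lam [delta [Hdelta Hnear]]]].
  assert (GV : admissible b m V J lam).
  { apply Hnear; [exact hV|]. rewrite l2w_norm2_minus_self. lra. }
  apply is_lim_seq_spec in Hd. destruct (Hd (mkposreal _ Hdelta)) as [N0 HN0].
  apply (gen_conv_of_graph_approx _ _ dist2 (gap_const b m lam) N0 (gap_const_nonneg b m lam hm)).
  - apply is_lim_seq_spec. exact Hd.
  - intros n Hn.
    assert (Gn : admissible b m (Vs n) J lam).
    { apply Hnear; [exact (hVs' n)|]. specialize (HN0 n Hn). simpl in HN0.
      rewrite Rminus_0_r in HN0. pose proof (Rle_abs (dist2 n)). unfold dist2 in *. lra. }
    split; [exact (gap_step b m (Vs n) V J lam hm Gn GV)|].
    unfold dist2. rewrite l2w_norm2_minus_sym. exact (gap_step b m V (Vs n) J lam hm GV Gn).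
Qed.
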